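(* The real line $\mathbb{R}$, the space of rational numbers $\mathbb{Q}$ and the space of irrational numbers $P=\mathbb{R}\setminus\mathbb{Q}$ (all with the usual subspace topology from $\mathbb{R}$) are each reconstructible.
   Context: For a topological space $X$ and $x \in X$, the set $X\setminus\{x\}$ carries the subspace topology. A card of $X$ is a space homeomorphic to $X \setminus \{x\}$ for some $x \in X$. The deck of $X$ is $\mathcal{D}(X)=\{[X\setminus\{x\}]_\sim : x \in X\}$, where $[Y]_\sim$ denotes the homeomorphism class of $Y$. A space $Z$ is a reconstruction of $X$ if $\mathcal{D}(Z)=\mathcal{D}(X)$. A space $X$ is reconstructible if every reconstruction of $X$ is homeomorphic to $X$. *)

From Stdlib Require Import Reals Lra QArith Qreals.
Open Scope R_scope.

(* A topological space: a carrier with a family of open sets closed under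
   finite intersections and arbitrary unions, containing the whole space
   (the empty set is the empty union). *)
Record TopSpace := {
  carrier :> Type;
  is_open : (carrier -> Prop) -> Prop;
  open_full : is_open (fun _ => True);
  open_inter : forall U V, is_open U -> is_open V -> is_open (fun x => U x /\ V x);
  open_union : forall F : (carrier -> Prop) -> Prop,
      (forall U, F U -> is_open U) -> is_open (fun x => exists U, F U /\ U x)
}.

Definition continuous (X Y : TopSpace) (f : X -> Y) : Prop :=
  forall V : Y -> Prop, is_open Y V -> is_open X (fun x => V (f x)).

Definition homeomorphic (X Y : TopSpace) : Prop :=
  exists (f : X -> Y) (g : Y -> X),
    (forall x, g (f x) = x) /\ (forall y, f (g y) = y) /\
    continuous X Y f /\ continuous Y X g.

Definition sub_open (X : TopSpace) (A : X -> Prop) (V : {x : X | A x} -> Prop) : Prop :=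
  exists U : X -> Prop, is_open X U /\ forall y, V y <-> U (proj1_sig y).

Lemma sub_open_full (X : TopSpace) (A : X -> Prop) : sub_open X A (fun _ => True).
Proof. exists (fun _ => True). split; [apply open_full | tauto]. Qed.

Lemma sub_open_inter (X : TopSpace) (A : X -> Prop) U V :
  sub_open X A U -> sub_open X A V -> sub_open X A (fun x => U x /\ V x).
Proof.
  intros [U' [HU EU]] [V' [HV EV]]. exists (fun x => U' x /\ V' x).
  split; [apply open_inter; auto|]. intros y. rewrite EU, EV. tauto.
Qed.

Lemma sub_open_union (X : TopSpace) (A : X -> Prop) F :
  (forall U, F U -> sub_open X A U) -> sub_open X A (fun x => exists U, F U /\ U x).
Proof.
  intros HF.
  exists (fun x => exists U, (is_open X U /\ exists V, F V /\ forall y, V y <-> U (proj1_sig y)) /\ U x).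
  split.
  - apply (open_union X (fun U => is_open X U /\ exists V, F V /\ forall y, V y <-> U (proj1_sig y))).
    intros U [H _]; exact H.
  - intros y; split.
    + intros [V [FV Vy]]. destruct (HF V FV) as [U [HU EU]].
      exists U. split; [split; [exact HU| exists V; auto] | apply EU; exact Vy].
    + intros [U [[HU [V [FV EV]]] Uy]]. exists V. split; [exact FV| apply EV; exact Uy].
Qed.

Definition subspace (X : TopSpace) (A : X -> Prop) : TopSpace :=
  {| carrier := {x : X | A x};
     is_open := sub_open X A;
     open_full := sub_open_full X A;
     open_inter := sub_open_inter X A;
     open_union := sub_open_union X A |}.

Definition card (X : TopSpace) (x : X) : TopSpace := subspace X (fun y => y <> x).

(* Y represents an element of the deck D(X), i.e. [Y] = [X \ {x}] for some x. *)
Definition in_deck (X Y : TopSpace) : Prop := exists x : X, homeomorphic Y (card X x).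

Definition same_deck (Z X : TopSpace) : Prop :=
  forall Y : TopSpace, in_deck Z Y <-> in_deck X Y.

Definition is_reconstruction (Z X : TopSpace) : Prop := same_deck Z X.

Definition reconstructible (X : TopSpace) : Prop :=
  forall Z : TopSpace, is_reconstruction Z X -> homeomorphic Z X.

Definition R_open (U : R -> Prop) : Prop :=
  forall x, U x -> exists eps, eps > 0 /\ forall y, Rabs (y - x) < eps -> U y.

Lemma R_open_full : R_open (fun _ => True).
Proof. intros x _. exists 1. split; [lra | auto]. Qed.

Lemma R_open_inter U V : R_open U -> R_open V -> R_open (fun x => U x /\ V x).
Proof.
  intros HU HV x [Ux Vx].
  destruct (HU x Ux) as [e1 [He1 H1]]. destruct (HV x Vx) as [e2 [He2 H2]].
  exists (Rmin e1 e2). split; [apply Rmin_pos; auto|].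
  intros y Hy. split; [apply H1 | apply H2];
  [apply Rlt_le_trans with (Rmin e1 e2); [exact Hy | apply Rmin_l]
  |apply Rlt_le_trans with (Rmin e1 e2); [exact Hy | apply Rmin_r]].
Qed.

Lemma R_open_union F : (forall U, F U -> R_open U) -> R_open (fun x => exists U, F U /\ U x).
Proof.
  intros HF x [U [FU Ux]]. destruct (HF U FU x Ux) as [e [He H]].
  exists e. split; [exact He|]. intros y Hy. exists U. auto.
Qed.

Definition R_top : TopSpace :=
  {| carrier := R; is_open := R_open; open_full := R_open_full;
     open_inter := R_open_inter; open_union := R_open_union |}.

Definition is_rational (x : R) : Prop := exists q : Q, x = Q2R q.

Definition Q_top : TopSpace := subspace R_top is_rational.
Definition P_top : TopSpace := subspace R_top (fun x => ~ is_rational x).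

(* Let Z have the deck of X.  Some card Z \ {z} is homeomorphic
   to a card of X, and every card of Z to a card of X.  Cards of X are
   Hausdorff and Z has three points, so Z is Hausdorff
   ([reconstruction_hausdorff]).

   For S = Q or P, order isomorphisms between
   open intervals mapping rationals exactly onto rationals are built from
   rational staircases ([interval_order_iso]); they are homeomorphisms, so
   every card of S is homeomorphic to S ([Sp_card_homeo]).  With Z \ {z}
   homeomorphic to S and w <> z, a small interval around the image of w with
   endpoints outside S pulls back to a clopen set C containing w with
   C = C \ {w} ([Sp_absorbing_nbhd]); hence Z = Z \ {w} ([absorb_point]),
   a card of S, i.e. S.

   Cards give charts: Z \ {z} onto
   W = (-1,0) u (0,1), and Z \ {w} onto R \ {x1}, the latter being a chart
   of Z around z.  Each side of z in the second chart is a continuous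
   injective path in W; it is monotone, converges to an endpoint of W
   (Hausdorffness), and the two sides end in different halves of W (else a
   third card, a punctured line, would split into three open pieces).
   Folding the halves of W so that these endpoints go to 0 and sending z to
   0 gives a homeomorphism Z = (-1,1) = R ([Z_homeo_line]). *)

From Stdlib Require Import Reals QArith Qreals Lra Lia ZArith.
From Stdlib Require Import ClassicalEpsilon Classical FunctionalExtensionality.
From Stdlib Require Import PropExtensionality ProofIrrelevance.
Open Scope R_scope.

(** * General topology *)

Lemma proj_inj {A : Type} {P : A -> Prop} (x y : {a | P a}) :
  proj1_sig x = proj1_sig y -> x = y.
Proof. intros E. apply eq_sig_hprop; auto. intros; apply proof_irrelevance. Qed.

Lemma open_ext (X : TopSpace) (U V : X -> Prop) :
  is_open X U -> (forall x, U x <-> V x) -> is_open X V.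
Proof.
  intros H E. assert (U = V) as <-; [|exact H].
  apply functional_extensionality; intro x; apply propositional_extensionality; apply E.
Qed.

Lemma open_or (X : TopSpace) U V : is_open X U -> is_open X V -> is_open X (fun x => U x \/ V x).
Proof.
  intros HU HV.
  apply open_ext with (fun x => exists W, (W = U \/ W = V) /\ W x).
  - apply open_union. intros W [-> | ->]; auto.
  - intro x; split.
    + intros [W [[-> | ->] Hx]]; auto.
    + intros [Hx|Hx]; [exists U|exists V]; auto.
Qed.

Lemma open_local (X : TopSpace) (U : X -> Prop) :
  (forall x, U x -> exists V, is_open X V /\ V x /\ forall y, V y -> U y) -> is_open X U.
Proof.
  intros H.
  apply open_ext with (fun x => exists W, (is_open X W /\ forall y, W y -> U y) /\ W x).
  - apply open_union. intros W [HW _]; auto.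
  - intro x; split.
    + intros [W [[_ HW] Hx]]; auto.
    + intros Hx. destruct (H x Hx) as [V [HV [Vx HVU]]]. exists V; auto.
Qed.

Lemma homeo_refl X : homeomorphic X X.
Proof. exists (fun x => x), (fun x => x). repeat split; intros V HV; exact HV. Qed.

Lemma homeo_sym X Y : homeomorphic X Y -> homeomorphic Y X.
Proof. intros [f [g [H1 [H2 [H3 H4]]]]]. exists g, f. auto. Qed.

Lemma homeo_trans X Y W : homeomorphic X Y -> homeomorphic Y W -> homeomorphic X W.
Proof.
  intros [f [g [H1 [H2 [H3 H4]]]]] [f' [g' [H1' [H2' [H3' H4']]]]].
  exists (fun x => f' (f x)), (fun y => g (g' y)). repeat split.
  - intro x. rewrite H1'. apply H1.
  - intro y. rewrite H2. apply H2'.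
  - intros V HV. apply (H3 (fun y => V (f' y))). apply H3'. exact HV.
  - intros V HV. apply (H4' (fun y => V (g y))). apply H4. exact HV.
Qed.

Lemma sub_ext (X : TopSpace) (A B : X -> Prop) :
  (forall x, A x <-> B x) -> homeomorphic (subspace X A) (subspace X B).
Proof.
  intros E.
  exists (fun y => exist B (proj1_sig y) (proj1 (E _) (proj2_sig y))),
         (fun y => exist A (proj1_sig y) (proj2 (E _) (proj2_sig y))).
  repeat split.
  - intros [x Hx]. apply proj_inj. reflexivity.
  - intros [x Hx]. apply proj_inj. reflexivity.
  - intros V [U [HU EU]]. exists U. split; [exact HU|]. intros [y Hy]. apply EU.
  - intros V [U [HU EU]]. exists U. split; [exact HU|]. intros [y Hy]. apply EU.
Qed.

Lemma sub_all (X : TopSpace) (A : X -> Prop) : (forall x, A x) -> homeomorphic (subspace X A) X.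
Proof.
  intros HA. exists (fun y => proj1_sig y), (fun x => exist A x (HA x)). repeat split.
  - intros [x Hx]. apply proj_inj. reflexivity.
  - intros V HV. exists V. split; auto. tauto.
  - intros V [U [HU EU]]. apply open_ext with U; auto. intros x. rewrite (EU (exist A x (HA x))). tauto.
Qed.

Lemma sub_sub (X : TopSpace) (A : X -> Prop) (B : {x | A x} -> Prop) (B' : X -> Prop) :
  (forall y, B y <-> B' (proj1_sig y)) ->
  homeomorphic (subspace (subspace X A) B) (subspace X (fun x => A x /\ B' x)).
Proof.
  intros E.
  pose (f := fun y : {y : {x : X | A x} | B y} =>
    exist (fun x => A x /\ B' x) (proj1_sig (proj1_sig y))
      (conj (proj2_sig (proj1_sig y)) (proj1 (E _) (proj2_sig y)))).
  pose (g := fun x : {x : X | A x /\ B' x} =>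
    exist B (exist A (proj1_sig x) (proj1 (proj2_sig x)))
      (proj2 (E (exist A (proj1_sig x) (proj1 (proj2_sig x)))) (proj2 (proj2_sig x)))).
  exists f, g.
  repeat split.
  - intros [[x Ha] Hb]. do 2 apply proj_inj. reflexivity.
  - intros [x Hx]. apply proj_inj. reflexivity.
  - intros V [U [HU EU]]. exists (fun y => U (proj1_sig y)). split.
    + exists U. split; auto. tauto.
    + intros [[x Ha] Hb]. simpl. apply EU.
  - intros V [U [[U0 [HU0 EU0]] EU]]. exists U0. split; auto.
    intros [x Hx]. simpl. rewrite EU. simpl. apply EU0.
Qed.

Lemma sub_homeo (X Y : TopSpace) (A : X -> Prop) (f : X -> Y) (g : Y -> X) :
  (forall x, g (f x) = x) -> (forall y, f (g y) = y) -> continuous X Y f -> continuous Y X g ->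
  homeomorphic (subspace X A) (subspace Y (fun y => A (g y))).
Proof.
  intros H1 H2 H3 H4.
  assert (K : forall x : {x : X | A x}, A (g (f (proj1_sig x)))).
  { intros x. rewrite H1. exact (proj2_sig x). }
  exists (fun x : {x : X | A x} => exist (fun y => A (g y)) (f (proj1_sig x)) (K x)).
  exists (fun y : {y : Y | A (g y)} => exist A (g (proj1_sig y)) (proj2_sig y)).
  repeat split.
  - intros [x Hx]. apply proj_inj. apply H1.
  - intros [y Hy]. apply proj_inj. apply H2.
  - intros V [U [HU EU]]. exists (fun x => U (f x)). split; [apply H3; auto|].
    intros [x Hx]. simpl. apply EU.
  - intros V [U [HU EU]]. exists (fun y => U (g y)). split; [apply H4; auto|].
    intros [y Hy]. simpl. apply EU.
Qed.

Lemma open_from_sub (Z T : TopSpace) (A : Z -> Prop) (f : subspace Z A -> T) (O : T -> Prop) :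
  is_open Z A -> continuous _ _ f -> is_open T O ->
  is_open Z (fun x => exists H : A x, O (f (exist _ x H))).
Proof.
  intros HA Hf HO. destruct (Hf O HO) as [U [HU EU]].
  apply open_ext with (fun x => U x /\ A x).
  - apply open_inter; auto.
  - intro x; split.
    + intros [Ux Ax]. exists Ax. apply (EU (exist _ x Ax)). exact Ux.
    + intros [Ax HO']. split; auto. apply (EU (exist _ x Ax)). exact HO'.
Qed.

Lemma open_to_sub (Z T : TopSpace) (A : Z -> Prop) (g : T -> subspace Z A) (U : Z -> Prop) :
  continuous _ _ g -> is_open Z U -> is_open T (fun t => U (proj1_sig (g t))).
Proof.
  intros Hg HU. apply (Hg (fun y => U (proj1_sig y))). exists U. split; auto. tauto.
Qed.

Definition t1 (X : TopSpace) := forall a : X, is_open X (fun x => x <> a).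
Definition hausdorff (X : TopSpace) := forall x y : X, x <> y ->
  exists U V, is_open X U /\ is_open X V /\ U x /\ V y /\ (forall t, U t -> V t -> False).

Lemma hausdorff_homeo X Y : homeomorphic X Y -> hausdorff Y -> hausdorff X.
Proof.
  intros [f [g [H1 [H2 [H3 H4]]]]] HY x y Hxy.
  destruct (HY (f x) (f y)) as [U [V [HU [HV [Ux [Vy D]]]]]].
  { intro E. apply Hxy. rewrite <- (H1 x), <- (H1 y), E. reflexivity. }
  exists (fun t => U (f t)), (fun t => V (f t)). repeat split; auto.
  intros t a b. eapply D; eauto.
Qed.

Lemma hausdorff_sub X A : hausdorff X -> hausdorff (subspace X A).
Proof.
  intros HX [x Hx] [y Hy] Hxy.
  destruct (HX x y) as [U [V [HU [HV [Ux [Vy D]]]]]].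
  { intro E. apply Hxy. apply proj_inj. exact E. }
  exists (fun t => U (proj1_sig t)), (fun t => V (proj1_sig t)). repeat split; auto.
  - exists U; split; auto; tauto.
  - exists V; split; auto; tauto.
  - intros t a b. eapply D; eauto.
Qed.

Lemma hausdorff_t1 X : hausdorff X -> t1 X.
Proof.
  intros HX a. apply open_local. intros x Hx.
  destruct (HX x a Hx) as [U [V [HU [HV [Ux [Va D]]]]]].
  exists U. repeat split; auto. intros y Uy E. subst y. exact (D a Uy Va).
Qed.

(** * Cards and decks *)

Lemma card_separates (Z : TopSpace) (t x y : Z) : hausdorff (card Z t) ->
  x <> t -> y <> t -> x <> y ->
  exists U V, is_open Z U /\ is_open Z V /\ U x /\ V y /\
    forall p, p <> t -> U p -> V p -> False.
Proof.
  intros HH Hx Hy Hxy.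
  destruct (HH (exist _ x Hx) (exist _ y Hy)) as [U [V [[U0 [HU0 EU0]] [[V0 [HV0 EV0]] [Ux [Vy D]]]]]].
  { intro E. apply Hxy. exact (f_equal (@proj1_sig _ _) E). }
  exists U0, V0. repeat split; auto.
  - apply (EU0 (exist _ x Hx)). exact Ux.
  - apply (EV0 (exist _ y Hy)). exact Vy.
  - intros p Hp Up Vp. apply (D (exist _ p Hp)); [apply EU0 | apply EV0]; exact Up || exact Vp.
Qed.

Lemma avoid_two (Z : Type) (a b c : Z) : a <> b -> a <> c -> b <> c ->
  forall x y : Z, exists t, t <> x /\ t <> y.
Proof.
  intros Hab Hac Hbc x y.
  destruct (classic (a <> x /\ a <> y)) as [Ha|Ha]; [exists a; exact Ha|].
  destruct (classic (b <> x /\ b <> y)) as [Hb|Hb]; [exists b; exact Hb|].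
  exists c. apply not_and_or in Ha, Hb.
  destruct Ha as [Ha|Ha]; destruct Hb as [Hb|Hb]; apply NNPP in Ha, Hb; subst;
    split; congruence.
Qed.

(* A space with three points all of whose cards are Hausdorff is Hausdorff:
   points are closed, and two points are separated inside the card at a third
   point, whose removal keeps the separating sets open. *)
Lemma deck_separation (Z : TopSpace) (a b c : Z) : a <> b -> a <> c -> b <> c ->
  (forall t, hausdorff (card Z t)) -> hausdorff Z.
Proof.
  intros Hab Hac Hbc HH.
  assert (T1 : t1 Z).
  { intros a0. apply open_local. intros x Hx.
    destruct (avoid_two Z a b c Hab Hac Hbc x a0) as [t [Htx Hta]].
    destruct (card_separates Z t x a0 (HH t)) as [U [V [HU [HV [Ux [Va D]]]]]]; auto.
    exists U. repeat split; auto. intros y Uy E. subst y. exact (D a0 (fun e => Hta (eq_sym e)) Uy Va). }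
  intros x y Hxy.
  destruct (avoid_two Z a b c Hab Hac Hbc x y) as [t [Htx Hty]].
  destruct (card_separates Z t x y (HH t)) as [U [V [HU [HV [Ux [Vy D]]]]]]; auto.
  exists (fun p => U p /\ p <> t), (fun p => V p /\ p <> t).
  repeat split; try apply open_inter; auto.
  intros p [Up Hp] [Vp _]. exact (D p Hp Up Vp).
Qed.

Lemma deck_card_left Z X : same_deck Z X -> forall z : Z, exists x : X, homeomorphic (card Z z) (card X x).
Proof. intros H z. apply (proj1 (H (card Z z))). exists z. apply homeo_refl. Qed.

Lemma deck_card_right Z X : same_deck Z X -> forall x : X, exists z : Z, homeomorphic (card Z z) (card X x).
Proof.
  intros H x. destruct (proj2 (H (card X x))) as [z Hz].
  - exists x. apply homeo_refl.
  - exists z. apply homeo_sym. exact Hz.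
Qed.

Lemma card_two_points (Z Y : TopSpace) (z : Z) : homeomorphic (card Z z) Y ->
  forall p q : Y, p <> q -> exists a c : Z, a <> z /\ c <> z /\ a <> c.
Proof.
  intros [h [hi [_ [H2 _]]]] p q Hpq.
  exists (proj1_sig (hi p)), (proj1_sig (hi q)). repeat split; try exact (proj2_sig (hi _)).
  intro E. apply Hpq. rewrite <- (H2 p), <- (H2 q). f_equal. apply proj_inj. exact E.
Qed.

Lemma reconstruction_hausdorff Z X : same_deck Z X -> hausdorff X ->
  forall a b c : Z, a <> b -> a <> c -> b <> c -> hausdorff Z.
Proof.
  intros HZ HX a b c Hab Hac Hbc. apply (deck_separation Z a b c Hab Hac Hbc).
  intro t. destruct (deck_card_left _ _ HZ t) as [x Hx].
  eapply hausdorff_homeo; [exact Hx|]. apply hausdorff_sub, HX.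
Qed.

(* If w has a clopen neighbourhood C with C homeomorphic to C \ {w}, then
   removing w does not change the space: use the homeomorphism on C and the
   identity off C. *)
Section Absorb.
Variables (Z : TopSpace) (C : Z -> Prop) (w : Z).
Hypothesis C_open : is_open Z C.
Hypothesis C_closed : is_open Z (fun x => ~ C x).
Hypothesis C_w : C w.
Variable p : subspace Z C -> subspace Z (fun x => C x /\ x <> w).
Variable q : subspace Z (fun x => C x /\ x <> w) -> subspace Z C.
Hypothesis qp : forall x, q (p x) = x.
Hypothesis pq : forall y, p (q y) = y.
Hypothesis p_cont : continuous _ _ p.
Hypothesis q_cont : continuous _ _ q.

Lemma outside_ne x : ~ C x -> x <> w.
Proof. intros Hx E. subst. exact (Hx C_w). Qed.

Definition absorb_to (x : Z) : card Z w :=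
  match excluded_middle_informative (C x) with
  | left Hx => exist (fun y => y <> w) (proj1_sig (p (exist C x Hx))) (proj2 (proj2_sig (p (exist C x Hx))))
  | right Hx => exist (fun y => y <> w) x (outside_ne x Hx) end.

Definition absorb_from (y : card Z w) : Z :=
  match excluded_middle_informative (C (proj1_sig y)) with
  | left Hy => proj1_sig (q (exist (fun x => C x /\ x <> w) (proj1_sig y) (conj Hy (proj2_sig y))))
  | right Hy => proj1_sig y end.

Lemma absorb_from_to x : absorb_from (absorb_to x) = x.
Proof.
  unfold absorb_to. destruct (excluded_middle_informative (C x)) as [Hx|Hx]; unfold absorb_from; cbn [proj1_sig].
  - destruct (excluded_middle_informative (C (proj1_sig (p (exist C x Hx))))) as [H'|H'].
    + erewrite (proj_inj _ (p (exist C x Hx))) by reflexivity. rewrite qp. reflexivity.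
    + exfalso. exact (H' (proj1 (proj2_sig (p (exist _ x Hx))))).
  - destruct (excluded_middle_informative (C x)); [contradiction|reflexivity].
Qed.

Lemma absorb_to_from y : absorb_to (absorb_from y) = y.
Proof.
  destruct y as [y Hy]. unfold absorb_from. cbn [proj1_sig proj2_sig].
  destruct (excluded_middle_informative (C y)) as [Cy|Cy]; unfold absorb_to.
  - set (u := q (exist _ y (conj Cy Hy))).
    destruct (excluded_middle_informative (C (proj1_sig u))) as [Cu|Cu].
    + apply proj_inj. cbn [proj1_sig].
      erewrite (proj_inj _ u) by reflexivity. unfold u. rewrite pq. reflexivity.
    + exfalso. exact (Cu (proj2_sig u)).
  - destruct (excluded_middle_informative (C y)); [contradiction|]. apply proj_inj. reflexivity.
Qed.

Lemma open_by_pieces (O U : Z -> Prop) :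
  is_open Z O -> is_open Z U -> is_open Z (fun x => (O x /\ C x) \/ (U x /\ ~ C x)).
Proof. intros HO HU. apply open_or; apply open_inter; auto. Qed.

Lemma absorb_to_cont : continuous Z (card Z w) absorb_to.
Proof.
  intros V [U [HU EU]].
  destruct (p_cont (fun y => U (proj1_sig y))) as [O [HO EO]]; [exists U; split; [exact HU | tauto]|].
  apply open_ext with (fun x => (O x /\ C x) \/ (U x /\ ~ C x)); [apply open_by_pieces; auto|].
  intro x. rewrite EU. unfold absorb_to. destruct (excluded_middle_informative (C x)) as [Hx|Hx]; cbn [proj1_sig].
  - pose proof (EO (exist _ x Hx)) as E. cbn [proj1_sig] in E. rewrite <- E. tauto.
  - tauto.
Qed.

Lemma absorb_from_cont : continuous (card Z w) Z absorb_from.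
Proof.
  intros U HU.
  destruct (q_cont (fun y => U (proj1_sig y))) as [O [HO EO]]; [exists U; split; [exact HU | tauto]|].
  exists (fun x => (O x /\ C x) \/ (U x /\ ~ C x)). split; [apply open_by_pieces; auto|].
  intros [y Hy]. unfold absorb_from. cbn [proj1_sig]. destruct (excluded_middle_informative (C y)) as [Cy|Cy].
  - pose proof (EO (exist _ y (conj Cy Hy))) as E. cbn [proj1_sig] in E. rewrite E. tauto.
  - tauto.
Qed.

End Absorb.

Lemma absorb_point (Z : TopSpace) (C : Z -> Prop) (w : Z) :
  is_open Z C -> is_open Z (fun x => ~ C x) -> C w ->
  homeomorphic (subspace Z C) (subspace Z (fun x => C x /\ x <> w)) ->
  homeomorphic Z (card Z w).
Proof.
  intros HC HnC Cw [p [q [Hqp [Hpq [Hp Hq]]]]].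
  exists (absorb_to Z C w Cw p), (absorb_from Z C w q).
  split; [apply absorb_from_to | split; [apply absorb_to_from | split]]; auto.
  - apply absorb_to_cont; auto.
  - apply absorb_from_cont; auto.
Qed.

(** * Rational and irrational reals *)

Lemma rat_plus x y : is_rational x -> is_rational y -> is_rational (x + y).
Proof. intros [p ->] [q ->]. exists (p + q)%Q. rewrite Q2R_plus. reflexivity. Qed.

Lemma rat_opp x : is_rational x -> is_rational (- x).
Proof. intros [p ->]. exists (- p)%Q. rewrite Q2R_opp. reflexivity. Qed.

Lemma rat_minus x y : is_rational x -> is_rational y -> is_rational (x - y).
Proof. intros. apply rat_plus; auto. apply rat_opp; auto. Qed.

Lemma rat_mult x y : is_rational x -> is_rational y -> is_rational (x * y).
Proof. intros [p ->] [q ->]. exists (p * q)%Q. rewrite Q2R_mult. reflexivity. Qed.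

Lemma rat_div x y : is_rational x -> is_rational y -> y <> 0 -> is_rational (x / y).
Proof.
  intros Hx [q ->] H. apply rat_mult; auto. exists (/ q)%Q. rewrite Q2R_inv; auto.
  intro E. apply H. rewrite (Qeq_eqR _ _ E). unfold Q2R. simpl. field.
Qed.

Lemma rat_IZR z : is_rational (IZR z).
Proof. exists (inject_Z z). unfold Q2R. simpl. field. Qed.

Lemma rat_INR n : is_rational (INR n).
Proof. rewrite INR_IZR_INZ. apply rat_IZR. Qed.

Lemma rat_between a b : a < b -> exists x, a < x < b /\ is_rational x.
Proof.
  intros Hab.
  set (n := up (/ (b - a))). set (m := up (a * IZR n)).
  destruct (archimed (/ (b - a))) as [A1 A2]. fold n in A1, A2.
  destruct (archimed (a * IZR n)) as [B1 B2]. fold m in B1, B2.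
  assert (Hba : / (b - a) > 0) by (apply Rinv_0_lt_compat; lra).
  assert (Hn : IZR n > 0) by lra.
  assert (K : (b - a) * IZR n > 1).
  { apply Rmult_gt_compat_l with (r := b - a) in A1; [|lra].
    rewrite Rinv_r in A1; lra. }
  exists (IZR m / IZR n). split; [split|].
  - apply Rmult_lt_reg_r with (IZR n); auto. unfold Rdiv. rewrite Rmult_assoc, Rinv_l; lra.
  - apply Rmult_lt_reg_r with (IZR n); auto. unfold Rdiv. rewrite Rmult_assoc, Rinv_l; nra.
  - apply rat_div; try apply rat_IZR. lra.
Qed.

(* No positive integer square is twice another one (infinite descent on d). *)
Lemma no_double_square : forall (n : nat) (d p : Z),
  (0 < d)%Z -> (Z.to_nat d <= n)%nat -> (p * p = 2 * (d * d))%Z -> False.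
Proof.
  induction n as [|n IH]; intros d p Hd Hn E.
  - lia.
  - destruct (Zeven_odd_dec p) as [Ep|Op].
    + destruct (Zeven_ex _ Ep) as [k ->].
      destruct (Zeven_odd_dec d) as [Ed|Od].
      * destruct (Zeven_ex _ Ed) as [j ->].
        apply (IH j k); lia.
      * destruct (Zodd_ex _ Od) as [j ->].
        assert (k * k = 2 * (j * j) + 2 * j + 1)%Z by lia. lia.
    + destruct (Zodd_ex _ Op) as [k ->].
      assert (2 * (k * k + k) + 1 = d * d)%Z by lia. lia.
Qed.

Lemma sqrt2_irrational : ~ is_rational (sqrt 2).
Proof.
  intros [[p d] E]. unfold Q2R in E. simpl in E.
  assert (Hd : IZR (Z.pos d) > 0) by (apply IZR_lt; lia).
  assert (E2 : IZR p = sqrt 2 * IZR (Z.pos d)) by (rewrite E; field; lra).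
  assert (E3 : IZR (p * p) = IZR (2 * (Z.pos d * Z.pos d))).
  { rewrite !mult_IZR, E2.
    replace (sqrt 2 * IZR (Z.pos d) * (sqrt 2 * IZR (Z.pos d))) with
      (sqrt 2 * sqrt 2 * (IZR (Z.pos d) * IZR (Z.pos d))) by ring.
    rewrite sqrt_sqrt; lra. }
  apply eq_IZR in E3.
  apply (no_double_square (Z.to_nat (Z.pos d)) (Z.pos d) p); auto; lia.
Qed.

(* Density of the irrationals: q1 + (q2 - q1) / sqrt 2 between two rationals. *)
Lemma irr_between a b : a < b -> exists x, a < x < b /\ ~ is_rational x.
Proof.
  intros H. destruct (rat_between a b H) as [q1 [[H1 H2] R1]].
  destruct (rat_between q1 b H2) as [q2 [[H3 H4] R2]].
  assert (S1 : 1 < sqrt 2) by (rewrite <- sqrt_1; apply sqrt_lt_1_alt; lra).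
  assert (Hd : 0 < (q2 - q1) / sqrt 2) by (apply Rdiv_lt_0_compat; lra).
  exists (q1 + (q2 - q1) / sqrt 2). split; [split|].
  - lra.
  - assert ((q2 - q1) / sqrt 2 < q2 - q1); [|lra].
    apply Rmult_lt_reg_r with (sqrt 2); [lra|]. unfold Rdiv. rewrite Rmult_assoc, Rinv_l; nra.
  - intro R3. apply sqrt2_irrational.
    replace (sqrt 2) with ((q2 - q1) / ((q1 + (q2 - q1) / sqrt 2) - q1)) by (field; split; lra).
    apply rat_div; [apply rat_minus; auto | apply rat_minus; auto | lra].
Qed.

(* [Sp true] is Q and [Sp false] is P; both are dense with dense complement. *)
Definition Sp (b : bool) (x : R) : Prop := if b then is_rational x else ~ is_rational x.

Lemma Sp_between b a c : a < c -> exists x, a < x < c /\ Sp b x.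
Proof. destruct b; simpl; [apply rat_between | apply irr_between]. Qed.

Lemma nSp_between b a c : a < c -> exists x, a < x < c /\ ~ Sp b x.
Proof.
  destruct b; simpl; intros H.
  - apply irr_between; auto.
  - destruct (rat_between a c H) as [x [Hx Rx]]. exists x. tauto.
Qed.

Lemma ball_open c e : R_open (fun t => Rabs (t - c) < e).
Proof.
  intros t Ht. exists (e - Rabs (t - c)). split; [lra|]. intros u Hu.
  pose proof (Rabs_triang (u - t) (t - c)). replace (u - t + (t - c)) with (u - c) in H by ring. lra.
Qed.

Lemma R_hausdorff : hausdorff R_top.
Proof.
  intros x y Hxy. set (e := Rabs (x - y) / 2).
  assert (He : e > 0) by (unfold e; pose proof (Rabs_pos_lt (x - y)); lra).
  exists (fun t => Rabs (t - x) < e), (fun t => Rabs (t - y) < e).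
  repeat split; try apply ball_open.
  - simpl. rewrite Rminus_diag, Rabs_R0. lra.
  - simpl. rewrite Rminus_diag, Rabs_R0. lra.
  - intros t a b. simpl in a, b. rewrite <- Rabs_Ropp in a.
    pose proof (Rabs_triang (- (t - x)) (t - y)). replace (- (t - x) + (t - y)) with (x - y) in H by ring.
    unfold e in *. lra.
Qed.

(** * Order isomorphisms between subsets of R *)

Definition order_iso (I J : R -> Prop) (f : R -> R) : Prop :=
  (forall x, I x -> J (f x)) /\ (forall y, J y -> exists x, I x /\ f x = y) /\
  (forall x y, I x -> I y -> x < y -> f x < f y).

Definition rat_preserving (I : R -> Prop) (f : R -> R) : Prop :=
  forall x, I x -> (is_rational (f x) <-> is_rational x).

Lemma order_iso_reflect I J f x y : order_iso I J f -> I x -> I y -> f x < f y -> x < y.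
Proof.
  intros [_ [_ M]] Ix Iy H. destruct (Rtotal_order x y) as [|[->|]]; auto; try lra.
  specialize (M y x Iy Ix H0). lra.
Qed.

Lemma order_iso_inj I J f x y : order_iso I J f -> I x -> I y -> f x = f y -> x = y.
Proof.
  intros [_ [_ M]] Ix Iy H. destruct (Rtotal_order x y) as [|[->|]]; auto.
  - specialize (M x y Ix Iy H0). lra.
  - specialize (M y x Iy Ix H0). lra.
Qed.

Lemma order_iso_inv I J f : order_iso I J f -> exists g, order_iso J I g /\
  (forall x, I x -> g (f x) = x) /\ (forall y, J y -> f (g y) = y) /\
  (rat_preserving I f -> rat_preserving J g).
Proof.
  intros MB. pose proof MB as [M1 [M2 M3]].
  pose (g := fun y => match excluded_middle_informative (J y) with
                   | left H => proj1_sig (constructive_indefinite_description _ (M2 y H))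
                   | right _ => 0 end).
  exists g.
  assert (G1 : forall y, J y -> I (g y) /\ f (g y) = y).
  { intros y Hy. unfold g. destruct (excluded_middle_informative (J y)); [|contradiction].
    destruct (constructive_indefinite_description _ _) as [x Hx]. exact Hx. }
  assert (GF : forall x, I x -> g (f x) = x).
  { intros x Hx. destruct (G1 (f x) (M1 x Hx)) as [A B]. apply (order_iso_inj I J f); auto. }
  split; [split; [|split]|split; [|split]].
  - intros y Hy. apply G1; auto.
  - intros x Hx. exists (f x). split; auto.
  - intros y1 y2 H1 H2 H. destruct (G1 y1 H1) as [A1 B1]. destruct (G1 y2 H2) as [A2 B2].
    apply (order_iso_reflect I J f); auto. rewrite B1, B2. auto.
  - exact GF.
  - intros y Hy. apply G1; auto.
  - intros RP y Hy. destruct (G1 y Hy) as [A B]. rewrite <- (RP _ A), B. tauto.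
Qed.

Lemma order_iso_comp I J K f g : order_iso I J f -> order_iso J K g -> order_iso I K (fun x => g (f x)).
Proof.
  intros [F1 [F2 F3]] [G1 [G2 G3]]. repeat split; auto.
  intros z Hz. destruct (G2 z Hz) as [y [Hy <-]]. destruct (F2 y Hy) as [x [Hx <-]]. eauto.
Qed.

Lemma rat_preserving_comp I J f g : order_iso I J f -> rat_preserving I f -> rat_preserving J g ->
  rat_preserving I (fun x => g (f x)).
Proof. intros [F1 _] R1 R2 x Hx. rewrite (R2 _ (F1 x Hx)). auto. Qed.

Lemma order_iso_ext I J I' J' f : order_iso I J f -> (forall x, I x <-> I' x) ->
  (forall y, J y <-> J' y) -> order_iso I' J' f.
Proof.
  intros [F1 [F2 F3]] EI EJ. repeat split.
  - intros x Hx. apply EJ, F1, EI, Hx.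
  - intros y Hy. destruct (F2 y (proj2 (EJ y) Hy)) as [x [Hx E]]. exists x. split; auto. apply EI; auto.
  - intros x y Hx Hy. apply F3; apply EI; auto.
Qed.

Lemma rat_preserving_sub I I' f : rat_preserving I f -> (forall x, I' x -> I x) -> rat_preserving I' f.
Proof. intros R E x Hx. apply R, E, Hx. Qed.

Definition glue (I1 : R -> Prop) (f1 f2 : R -> R) (x : R) : R :=
  if excluded_middle_informative (I1 x) then f1 x else f2 x.

Lemma order_iso_glue I1 J1 f1 I2 J2 f2 :
  order_iso I1 J1 f1 -> order_iso I2 J2 f2 ->
  (forall x y, I1 x -> I2 y -> x < y) -> (forall x y, J1 x -> J2 y -> x < y) ->
  order_iso (fun x => I1 x \/ I2 x) (fun y => J1 y \/ J2 y) (glue I1 f1 f2).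
Proof.
  intros [F1 [F2 F3]] [G1 [G2 G3]] HI HJ. unfold glue.
  assert (D : forall x, I1 x -> I2 x -> False) by (intros x A B; specialize (HI x x A B); lra).
  repeat split.
  - intros x [Hx|Hx]; destruct (excluded_middle_informative (I1 x)); auto.
    exfalso; eauto.
  - intros y [Hy|Hy].
    + destruct (F2 y Hy) as [x [Hx E]]. exists x. split; auto.
      destruct (excluded_middle_informative (I1 x)); [auto|contradiction].
    + destruct (G2 y Hy) as [x [Hx E]]. exists x. split; auto.
      destruct (excluded_middle_informative (I1 x)); [exfalso; eauto|auto].
  - intros x y Hx Hy H.
    destruct (excluded_middle_informative (I1 x)) as [A|A];
    destruct (excluded_middle_informative (I1 y)) as [B|B].
    + auto.
    + destruct Hy as [Hy|Hy]; [contradiction|]. apply HJ; auto.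
    + destruct Hx as [Hx|Hx]; [contradiction|]. exfalso. specialize (HI y x B Hx). lra.
    + destruct Hx as [Hx|Hx]; [contradiction|]. destruct Hy as [Hy|Hy]; [contradiction|]. auto.
Qed.

Lemma rat_preserving_glue I1 f1 I2 f2 : rat_preserving I1 f1 -> rat_preserving I2 f2 ->
  rat_preserving (fun x => I1 x \/ I2 x) (glue I1 f1 f2).
Proof.
  intros R1 R2 x Hx. unfold glue. destruct (excluded_middle_informative (I1 x)); [auto|].
  destruct Hx; [contradiction|auto].
Qed.

Lemma order_iso_opp I J f : order_iso I J f ->
  order_iso (fun x => I (- x)) (fun y => J (- y)) (fun x => - f (- x)).
Proof.
  intros [F1 [F2 F3]]. repeat split.
  - intros x Hx. rewrite Ropp_involutive. auto.
  - intros y Hy. destruct (F2 _ Hy) as [x [Hx E]]. exists (- x). rewrite Ropp_involutive. split; auto. lra.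
  - intros x y Hx Hy H. assert (f (- y) < f (- x)) by (apply F3; auto; lra). lra.
Qed.

Lemma rat_preserving_opp I f : rat_preserving I f -> rat_preserving (fun x => I (- x)) (fun x => - f (- x)).
Proof.
  intros R x Hx.
  assert (E : forall y, is_rational (- y) <-> is_rational y).
  { intro y. split; intro H; [rewrite <- (Ropp_involutive y)|]; apply rat_opp; exact H. }
  rewrite E, (R _ Hx), E. tauto.
Qed.

Lemma order_iso_remove I J f c : order_iso I J f -> I c ->
  order_iso (fun x => I x /\ x <> c) (fun y => J y /\ y <> f c) f.
Proof.
  intros MB Ic. pose proof MB as [F1 [F2 F3]]. split; [|split].
  - intros x [Hx Hc]. split; auto. intro E. apply Hc. apply (order_iso_inj I J f); auto.
  - intros y [Hy Hc]. destruct (F2 y Hy) as [x [Hx E]]. exists x. repeat split; auto.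
    intro; subst; auto.
  - intros x y [Hx _] [Hy _]. auto.
Qed.

(** * Open intervals with possibly infinite endpoints ([None] = infinity) *)

Definition ivl (u : option R) (x : R) : Prop := match u with Some a => a < x | None => True end.
Definition ivr (v : option R) (x : R) : Prop := match v with Some b => x < b | None => True end.
Definition iv u v x := ivl u x /\ ivr v x.
Definition ivlt (u v : option R) : Prop := match u, v with Some a, Some b => a < b | _, _ => True end.

Lemma iv_open u v : R_open (iv u v).
Proof.
  intros x [Hl Hr].
  assert (exists e, e > 0 /\ ivl u (x - e) /\ ivr v (x + e)) as [e [He [A B]]].
  { destruct u as [a|]; destruct v as [b|]; simpl in *.
    - exists (Rmin (x - a) (b - x) / 2). unfold Rmin. destruct (Rle_dec (x - a) (b - x)); repeat split; lra.
    - exists ((x - a) / 2). repeat split; lra.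
    - exists ((b - x) / 2). repeat split; lra.
    - exists 1. repeat split; lra. }
  exists e. split; auto. intros y Hy. apply Rabs_def2 in Hy. destruct Hy as [Hy1 Hy2].
  destruct u; destruct v; simpl in *; split; simpl; auto; lra.
Qed.

Definition oneg (u : option R) : option R := match u with Some a => Some (- a) | None => None end.

Lemma ivr_neg u x : ivr (oneg u) (- x) <-> ivl u x.
Proof. destruct u; simpl; [split; intros; lra | tauto]. Qed.

Lemma iv_rat u v : ivlt u v -> exists c, is_rational c /\ iv u v c.
Proof.
  destruct u as [a|]; destruct v as [b|]; simpl; intros H.
  - destruct (rat_between a b H) as [c [[A B] C]]. exists c. unfold iv; simpl. auto.
  - destruct (rat_between a (a+1)) as [c [[A B] C]]; [lra|]. exists c. unfold iv; simpl. auto.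
  - destruct (rat_between (b-1) b) as [c [[A B] C]]; [lra|]. exists c. unfold iv; simpl. auto.
  - exists 0. split; [apply (rat_INR 0)|]. unfold iv; simpl; auto.
Qed.

(** * Rational staircases *)

(* A rational choice in (a, b) (default a). *)
Definition qb (a b : R) : R :=
  match excluded_middle_informative (a < b) with
  | left H => proj1_sig (constructive_indefinite_description _ (rat_between a b H))
  | right _ => a end.

Lemma qb_spec a b : a < b -> a < qb a b < b /\ is_rational (qb a b).
Proof.
  intros H. unfold qb. destruct (excluded_middle_informative (a < b)); [|contradiction].
  destruct (constructive_indefinite_description _ _) as [x Hx]. exact Hx.
Qed.

(* Rational points c < r 1 < r 2 < ... increasing to b, with b - 1/n < r n. *)
Fixpoint rs (c b : R) (n : nat) : R :=
  match n with O => c | S n => qb (Rmax (rs c b n) (b - / INR (S n))) b end.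

Lemma floor_nat t : 0 <= t -> exists n : nat, INR n <= t < INR n + 1.
Proof.
  intros Ht. destruct (archimed t) as [A1 A2].
  assert (Hz : (0 < up t)%Z) by (apply lt_IZR; lra).
  exists (Z.to_nat (up t - 1)). rewrite INR_IZR_INZ, Z2Nat.id by lia.
  rewrite minus_IZR. simpl. lra.
Qed.

Lemma rat_staircase c v : is_rational c -> ivr v c ->
  exists r : nat -> R, r O = c /\ (forall n, is_rational (r n)) /\ (forall n, r n < r (S n)) /\
    (forall n, ivr v (r n)) /\ (forall y, ivr v y -> exists n, y < r n).
Proof.
  intros Rc Hc. destruct v as [b|]; simpl in *.
  - assert (Hstep : forall n, rs c b n < b -> Rmax (rs c b n) (b - / INR (S n)) < b).
    { intros n K. unfold Rmax. destruct (Rle_dec _ _); [|lra].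
      assert (/ INR (S n) > 0) by (apply Rinv_0_lt_compat, lt_0_INR; lia). lra. }
    assert (K : forall n, rs c b n < b /\ is_rational (rs c b n)).
    { induction n as [|n IH]; [simpl; auto|].
      destruct (qb_spec _ _ (Hstep n (proj1 IH))) as [[Q1 Q2] Q3].
      change (rs c b (S n)) with (qb (Rmax (rs c b n) (b - / INR (S n))) b). auto. }
    assert (K2 : forall n, rs c b n < rs c b (S n) /\ b - / INR (S n) < rs c b (S n)).
    { intro n. destruct (qb_spec _ _ (Hstep n (proj1 (K n)))) as [[Q1 Q2] _].
      pose proof (Rmax_l (rs c b n) (b - / INR (S n))).
      pose proof (Rmax_r (rs c b n) (b - / INR (S n))).
      change (rs c b (S n)) with (qb (Rmax (rs c b n) (b - / INR (S n))) b). split; lra. }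
    exists (rs c b). repeat split; try apply K; try apply K2.
    intros y Hy. destruct (floor_nat (/ (b - y))) as [n [N1 N2]].
    { left. apply Rinv_0_lt_compat. lra. }
    exists (S n). destruct (K2 n) as [_ B].
    assert (/ INR (S n) < b - y); [|lra].
    rewrite S_INR, <- (Rinv_inv (b - y)).
    apply Rinv_lt_contravar; [|lra].
    apply Rmult_lt_0_compat; [apply Rinv_0_lt_compat; lra|]. pose proof (pos_INR n). lra.
  - exists (fun n => c + INR n). repeat split.
    + simpl. ring.
    + intro n. apply rat_plus; auto. apply rat_INR.
    + intro n. rewrite S_INR. lra.
    + intros y _. destruct (Rle_dec 0 (y - c)) as [H|H].
      * destruct (floor_nat (y - c) H) as [n [N1 N2]]. exists (S n). rewrite S_INR. lra.
      * exists O. simpl. lra.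
Qed.

(* The piecewise linear map sending each step [r n, r (S n)] of a staircase
   onto [n, n + 1] is a rationality preserving order isomorphism from
   [r 0, v) onto [0, +oo). *)
Section Staircase.
Variable v : option R.
Variable r : nat -> R.
Hypothesis r_rat : forall n, is_rational (r n).
Hypothesis r_inc : forall n, r n < r (S n).
Hypothesis r_bound : forall n, ivr v (r n).
Hypothesis r_cofinal : forall y, ivr v y -> exists n, y < r n.

Let dom (y : R) := r O <= y /\ ivr v y.
Let step (n : nat) (y : R) := r n <= y < r (S n).

Lemma staircase_le n m : (n <= m)%nat -> r n <= r m.
Proof.
  induction 1 as [|m _ IH]; [lra|]. specialize (r_inc m). lra.
Qed.

Lemma staircase_step_exists y : dom y -> exists n, step n y.
Proof.
  intros [H1 H2]. destruct (r_cofinal y H2) as [N HN].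
  induction N as [|N IH]; [lra|].
  destruct (Rle_dec (r N) y) as [H|H].
  - exists N. split; auto.
  - apply IH. lra.
Qed.

Lemma staircase_step_unique y n m : step n y -> step m y -> n = m.
Proof.
  intros [A B] [C D].
  destruct (Nat.lt_trichotomy n m) as [H|[H|H]]; auto.
  - assert (r (S n) <= r m) by (apply staircase_le; lia). lra.
  - assert (r (S m) <= r n) by (apply staircase_le; lia). lra.
Qed.

Definition stair_index (y : R) : nat :=
  match excluded_middle_informative (exists n, r n <= y < r (S n)) with
  | left H => proj1_sig (constructive_indefinite_description _ H)
  | right _ => O end.

Lemma stair_index_step y : dom y -> step (stair_index y) y.
Proof.
  intros Hy. unfold stair_index. destruct (excluded_middle_informative _) as [H|H].
  - destruct (constructive_indefinite_description _ _) as [n Hn]. exact Hn.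
  - exfalso. apply H. apply staircase_step_exists; auto.
Qed.

Definition stair (y : R) : R :=
  let n := stair_index y in INR n + (y - r n) / (r (S n) - r n).

Lemma stair_on_step y n : dom y -> step n y -> stair y = INR n + (y - r n) / (r (S n) - r n).
Proof.
  intros Hy Hs. unfold stair. rewrite (staircase_step_unique y _ n (stair_index_step y Hy) Hs). reflexivity.
Qed.

Lemma stair_range y n : step n y -> INR n <= INR n + (y - r n) / (r (S n) - r n) < INR n + 1.
Proof.
  intros [A B]. specialize (r_inc n). split.
  - assert (0 <= (y - r n) / (r (S n) - r n)); [|lra].
    apply Rmult_le_pos; [lra| left; apply Rinv_0_lt_compat; lra].
  - assert ((y - r n) / (r (S n) - r n) < 1); [|lra].
    apply Rmult_lt_reg_r with (r (S n) - r n); [lra|].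
    unfold Rdiv. rewrite Rmult_assoc, Rinv_l; lra.
Qed.

Lemma stair_order_iso : order_iso dom (fun t => 0 <= t) stair.
Proof.
  repeat split.
  - intros y Hy. pose proof (stair_index_step y Hy) as Hs.
    destruct (stair_range y _ Hs). pose proof (pos_INR (stair_index y)). unfold stair. lra.
  - intros t Ht. destruct (floor_nat t Ht) as [n [N1 N2]].
    pose proof (r_inc n) as Dn.
    set (y := r n + (t - INR n) * (r (S n) - r n)).
    assert (Y1 : step n y).
    { unfold y, step. split.
      - assert (0 <= (t - INR n) * (r (S n) - r n)) by (apply Rmult_le_pos; lra). lra.
      - assert ((t - INR n) * (r (S n) - r n) < 1 * (r (S n) - r n)) by (apply Rmult_lt_compat_r; lra). lra. }
    assert (Y2 : dom y).
    { split; [pose proof (staircase_le O n (Nat.le_0_l n)); unfold step in Y1; lra|].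
      specialize (r_bound (S n)). destruct v; simpl in *; auto. destruct Y1. lra. }
    exists y. split; auto. rewrite (stair_on_step y n Y2 Y1). unfold y. field. lra.
  - intros y1 y2 H1 H2 H.
    pose proof (stair_index_step y1 H1) as S1. pose proof (stair_index_step y2 H2) as S2.
    pose proof (stair_range _ _ S1). pose proof (stair_range _ _ S2).
    destruct S1 as [C1 D1], S2 as [C2 D2]. unfold stair.
    destruct (Nat.lt_trichotomy (stair_index y1) (stair_index y2)) as [L|[L|L]].
    + assert (INR (stair_index y1) + 1 <= INR (stair_index y2)); [|lra].
      rewrite <- S_INR. apply le_INR. lia.
    + rewrite <- L in *. apply Rplus_lt_compat_l. unfold Rdiv. apply Rmult_lt_compat_r; [|lra].
      apply Rinv_0_lt_compat. specialize (r_inc (stair_index y1)). lra.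
    + assert (r (S (stair_index y2)) <= r (stair_index y1)) by (apply staircase_le; lia). lra.
Qed.

Lemma stair_rat : rat_preserving dom stair.
Proof.
  intros y Hy. pose proof (stair_index_step y Hy) as [A B]. unfold stair.
  set (n := stair_index y) in *. set (q := INR n + (y - r n) / (r (S n) - r n)).
  assert (DZ : r (S n) - r n <> 0) by (specialize (r_inc n); lra).
  split; intro K.
  - replace y with (r n + (q - INR n) * (r (S n) - r n)) by (unfold q; field; auto).
    apply rat_plus; auto. apply rat_mult; apply rat_minus; auto. apply rat_INR.
  - apply rat_plus; [apply rat_INR|]. apply rat_div; auto; apply rat_minus; auto.
Qed.

Lemma stair_start : stair (r O) = 0.
Proof.
  assert (H0 : dom (r O)) by (split; [lra| apply r_bound]).
  rewrite (stair_on_step (r O) O H0) by (split; [lra| apply r_inc]).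
  simpl. field. specialize (r_inc O). lra.
Qed.

End Staircase.

Lemma half_line_order_iso c v : is_rational c -> ivr v c ->
  exists f, order_iso (fun x => c <= x /\ ivr v x) (fun t => 0 <= t) f /\
            rat_preserving (fun x => c <= x /\ ivr v x) f /\ f c = 0.
Proof.
  intros Rc Hc. destruct (rat_staircase c v Rc Hc) as [r [R0 [RR [RI [RV RU]]]]].
  subst c. exists (stair r). split; [|split].
  - exact (stair_order_iso v r RI RV RU).
  - exact (stair_rat v r RR RI RU).
  - exact (stair_start v r RI RV RU).
Qed.

(* Every nonempty open interval is order isomorphic to R, rationally:
   glue a half-line map on [c, v) with a reflected one on (u, c). *)
Lemma interval_to_line u v : ivlt u v ->
  exists f, order_iso (iv u v) (fun _ => True) f /\ rat_preserving (iv u v) f.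
Proof.
  intros H. destruct (iv_rat u v H) as [c [Rc [Hu Hv]]].
  destruct (half_line_order_iso c v Rc Hv) as [f1 [M1 [R1 Z1]]].
  destruct (half_line_order_iso (- c) (oneg u) (rat_opp _ Rc) (proj2 (ivr_neg u c) Hu))
    as [f2 [M2 [R2 Z2]]].
  assert (Ic : - c <= - c /\ ivr (oneg u) (- c)) by (split; [lra| apply ivr_neg; auto]).
  pose proof (order_iso_remove _ _ _ c (order_iso_opp _ _ _ M2) Ic) as M3.
  assert (M4 : order_iso (fun x => ivl u x /\ x < c) (fun y => y < 0) (fun x => - f2 (- x))).
  { eapply order_iso_ext; [exact M3| |].
    - intro x. cbv beta. rewrite ivr_neg. split; [intros [[A B] C]; split; auto; lra| intros [A B]; repeat split; auto; lra].
    - intro y. cbv beta. rewrite Z2. split; [intros [A B]; lra| intros A; split; lra]. }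
  assert (R4 : rat_preserving (fun x => ivl u x /\ x < c) (fun x => - f2 (- x))).
  { eapply rat_preserving_sub; [exact (rat_preserving_opp _ _ R2)|].
    intros x [A B]. split; [lra|]. apply ivr_neg; auto. }
  assert (Split : forall x, iv u v x <-> (ivl u x /\ x < c) \/ (c <= x /\ ivr v x)).
  { intro x. unfold iv. split.
    - intros [A B]. destruct (Rlt_le_dec x c); [left|right]; auto.
    - intros [[A B]|[A B]]; split; auto.
      + destruct v; simpl in *; auto. lra.
      + destruct u; simpl in *; auto. lra. }
  exists (glue (fun x => ivl u x /\ x < c) (fun x => - f2 (- x)) f1). split.
  - eapply order_iso_ext; [apply (order_iso_glue _ _ _ _ _ _ M4 M1)| |].
    + intros x y [_ A] [B _]. lra.
    + intros x y A B. lra.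
    + intro x. rewrite Split. tauto.
    + intro y. split; auto. intros _. destruct (Rlt_le_dec y 0); auto.
  - eapply rat_preserving_sub; [apply (rat_preserving_glue _ _ _ _ R4 R1)|].
    intros x Hx. apply Split. exact Hx.
Qed.

Lemma interval_order_iso u v u' v' : ivlt u v -> ivlt u' v' ->
  exists f, order_iso (iv u v) (iv u' v') f /\ rat_preserving (iv u v) f.
Proof.
  intros H H'. destruct (interval_to_line u v H) as [f1 [M1 R1]].
  destruct (interval_to_line u' v' H') as [f2 [M2 R2]].
  destruct (order_iso_inv _ _ _ M2) as [g2 [N2 [_ [_ RR]]]].
  exists (fun x => g2 (f1 x)). split.
  - eapply order_iso_comp; eauto.
  - eapply rat_preserving_comp; eauto.
Qed.

Definition punctured (u : option R) (c : R) (v : option R) (x : R) : Prop :=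
  iv u (Some c) x \/ iv (Some c) v x.

Lemma punctured_order_iso u c v u' c' v' : iv u v c -> iv u' v' c' ->
  exists f, order_iso (punctured u c v) (punctured u' c' v') f /\ rat_preserving (punctured u c v) f.
Proof.
  intros [H1 H2] [H3 H4].
  destruct (interval_order_iso u (Some c) u' (Some c')) as [f1 [M1 R1]].
  { destruct u; simpl in *; auto. } { destruct u'; simpl in *; auto. }
  destruct (interval_order_iso (Some c) v (Some c') v') as [f2 [M2 R2]].
  { destruct v; simpl in *; auto. } { destruct v'; simpl in *; auto. }
  exists (glue (iv u (Some c)) f1 f2). split.
  - apply order_iso_glue; [exact M1|exact M2| |]; intros x y [_ A] [B _]; simpl in *; lra.
  - apply rat_preserving_glue; auto.
Qed.

Lemma punctured_open u c v : R_open (punctured u c v).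
Proof. apply (open_or R_top); apply iv_open. Qed.

Lemma punctured_spec u c v x : iv u v c -> (punctured u c v x <-> iv u v x /\ x <> c).
Proof.
  unfold punctured, iv. intros [Cu Cv]. split.
  - intros [[A B]|[A B]]; simpl in *; (split; [split|intro; subst; lra]); auto.
    + destruct v; simpl in *; auto; lra.
    + destruct u; simpl in *; auto; lra.
  - intros [[A B] C]. simpl.
    destruct (Rtotal_order x c) as [L|[L|L]]; [left|contradiction|right]; tauto.
Qed.

Lemma order_iso_continuous D E f : order_iso D E f -> R_open E -> forall x, D x -> forall eps, eps > 0 ->
  exists del, del > 0 /\ forall x', D x' -> Rabs (x' - x) < del -> Rabs (f x' - f x) < eps.
Proof.
  intros MB HE x Dx eps Heps. pose proof MB as [M1 [M2 M3]].
  destruct (HE (f x) (M1 x Dx)) as [e [He Be]].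
  set (e' := Rmin e eps / 2).
  assert (He' : 0 < e' /\ e' < e /\ e' < eps).
  { unfold e', Rmin. destruct (Rle_dec e eps); lra. }
  assert (E1 : E (f x - e'))
    by (apply Be; replace (f x - e' - f x) with (- e') by ring; rewrite Rabs_Ropp, Rabs_right; lra).
  assert (E2 : E (f x + e'))
    by (apply Be; replace (f x + e' - f x) with e' by ring; rewrite Rabs_right; lra).
  destruct (M2 _ E1) as [x1 [D1 F1]]. destruct (M2 _ E2) as [x2 [D2 F2]].
  assert (L1 : x1 < x) by (apply (order_iso_reflect D E f); auto; lra).
  assert (L2 : x < x2) by (apply (order_iso_reflect D E f); auto; lra).
  exists (Rmin (x - x1) (x2 - x)). split.
  - unfold Rmin. destruct (Rle_dec _ _); lra.
  - intros x' D' Hx'. apply Rabs_def2 in Hx'. destruct Hx' as [A B].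
    assert (x1 < x' /\ x' < x2) as [C1 C2].
    { unfold Rmin in *. destruct (Rle_dec (x - x1) (x2 - x)); split; lra. }
    pose proof (M3 _ _ D1 D' C1). pose proof (M3 _ _ D' D2 C2).
    apply Rabs_def1; lra.
Qed.

Lemma order_iso_preimage_open D E f : order_iso D E f -> R_open D -> R_open E ->
  forall U, R_open U -> R_open (fun x => D x /\ U (f x)).
Proof.
  intros MB HD HE U HU x [Dx Ux].
  destruct (HU _ Ux) as [e [He Be]].
  destruct (order_iso_continuous D E f MB HE x Dx e He) as [d1 [Hd1 B1]].
  destruct (HD x Dx) as [d2 [Hd2 B2]].
  exists (Rmin d1 d2). split; [unfold Rmin; destruct (Rle_dec _ _); lra|].
  intros y Hy.
  assert (Rabs (y - x) < d1 /\ Rabs (y - x) < d2) as [A B]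
    by (unfold Rmin in Hy; destruct (Rle_dec _ _); split; lra).
  assert (Dy : D y) by auto. split; [exact Dy| apply Be; auto].
Qed.

Lemma order_iso_homeo (T : R -> Prop) D E f : R_open D -> R_open E -> order_iso D E f ->
  (forall x, D x -> (T (f x) <-> T x)) ->
  homeomorphic (subspace R_top (fun x => T x /\ D x)) (subspace R_top (fun x => T x /\ E x)).
Proof.
  intros HD HE MB TP.
  destruct (order_iso_inv _ _ _ MB) as [g [MG [GF [FG _]]]].
  pose proof MB as [F1 _]. pose proof MG as [G1 _].
  assert (TG : forall y, E y -> (T (g y) <-> T y)).
  { intros y Ey. rewrite <- (TP _ (G1 y Ey)), FG; auto. tauto. }
  assert (K1 : forall x : {x | T x /\ D x}, T (f (proj1_sig x)) /\ E (f (proj1_sig x))).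
  { intros [x [Tx Dx]]. simpl. split; auto. apply TP; auto. }
  assert (K2 : forall y : {y | T y /\ E y}, T (g (proj1_sig y)) /\ D (g (proj1_sig y))).
  { intros [y [Ty Ey]]. simpl. split; auto. apply TG; auto. }
  exists (fun x => exist _ (f (proj1_sig x)) (K1 x)), (fun y => exist _ (g (proj1_sig y)) (K2 y)).
  repeat split.
  - intros [x [Tx Dx]]. apply proj_inj. simpl. auto.
  - intros [y [Ty Ey]]. apply proj_inj. simpl. auto.
  - intros V [U [HU EU]]. exists (fun x => D x /\ U (f x)). split.
    + apply (order_iso_preimage_open D E f); auto.
    + intros [x [Tx Dx]]. simpl. rewrite EU. simpl. tauto.
  - intros V [U [HU EU]]. exists (fun y => E y /\ U (g y)). split.
    + apply (order_iso_preimage_open E D g); auto.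
    + intros [y [Ty Ey]]. simpl. rewrite EU. simpl. tauto.
Qed.

Lemma rat_preserving_Sp b D f : rat_preserving D f -> forall x, D x -> (Sp b (f x) <-> Sp b x).
Proof. intros R x Dx. destruct b; simpl; rewrite (R x Dx); tauto. Qed.

Lemma Sp_punctured_homeo b u c v u' c' v' : iv u v c -> iv u' v' c' ->
  homeomorphic (subspace R_top (fun x => Sp b x /\ punctured u c v x))
               (subspace R_top (fun x => Sp b x /\ punctured u' c' v' x)).
Proof.
  intros H H'. destruct (punctured_order_iso u c v u' c' v' H H') as [f [M R]].
  exact (order_iso_homeo (Sp b) _ _ f (punctured_open _ _ _) (punctured_open _ _ _) M (rat_preserving_Sp b _ f R)).
Qed.

(** * Q and P are reconstructible *)

Lemma card_sub (S : R -> Prop) (x0 : subspace R_top S) :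
  homeomorphic (card (subspace R_top S) x0) (subspace R_top (fun x => S x /\ x <> proj1_sig x0)).
Proof.
  apply sub_sub. intros y. split.
  - intros H E. apply H. apply proj_inj. exact E.
  - intros H E. apply H. rewrite E. reflexivity.
Qed.

(* Removing a point from an interval of S = Q or P does not change it: move
   the puncture to a point outside S. *)
Lemma Sp_interval_remove_point b u v c : iv u v c ->
  homeomorphic (subspace R_top (fun x => Sp b x /\ iv u v x))
               (subspace R_top (fun x => Sp b x /\ iv u v x /\ x <> c)).
Proof.
  intros Hc. destruct (iv_open u v c Hc) as [e [He Be]].
  destruct (nSp_between b (c - e) c) as [c0 [Hc0 Nc0]]; [lra|].
  assert (Ic0 : iv u v c0) by (apply Be; apply Rabs_def1; lra).
  eapply homeo_trans.
  { apply (sub_ext R_top _ (fun x => Sp b x /\ punctured u c0 v x)). intro x.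
    rewrite (punctured_spec u c0 v x Ic0).
    split; [intros [A B]; refine (conj A (conj B _)); intro; subst; contradiction | tauto]. }
  eapply homeo_trans; [apply (Sp_punctured_homeo b u c0 v u c v Ic0 Hc)|].
  apply sub_ext. intro x. rewrite (punctured_spec u c v x Hc). tauto.
Qed.

Lemma Sp_card_homeo b (x0 : subspace R_top (Sp b)) :
  homeomorphic (card (subspace R_top (Sp b)) x0) (subspace R_top (Sp b)).
Proof.
  eapply homeo_trans; [apply card_sub|].
  eapply homeo_trans.
  { apply (sub_ext R_top _ (fun x => Sp b x /\ iv None None x /\ x <> proj1_sig x0)).
    intro x. unfold iv; simpl. tauto. }
  eapply homeo_trans; [apply homeo_sym, Sp_interval_remove_point; split; exact I|].
  apply sub_ext. intro x. unfold iv; simpl. tauto.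
Qed.

Definition pullback (Z : TopSpace) (z : Z) (Y : Type) (h : card Z z -> Y) (P : Y -> Prop) (x : Z) : Prop :=
  exists H : x <> z, P (h (exist _ x H)).

Lemma pullback_homeo (Z : TopSpace) (z : Z) (S : R -> Prop)
  (h : card Z z -> subspace R_top S) (hi : subspace R_top S -> card Z z) :
  (forall x, hi (h x) = x) -> (forall y, h (hi y) = y) -> continuous _ _ h -> continuous _ _ hi ->
  forall P : R -> Prop,
  homeomorphic (subspace Z (pullback Z z _ h (fun y => P (proj1_sig y))))
               (subspace R_top (fun x => S x /\ P x)).
Proof.
  intros H1 H2 H3 H4 P.
  assert (E1 : forall y : card Z z, P (proj1_sig (h y)) <->
     pullback Z z _ h (fun y => P (proj1_sig y)) (proj1_sig y)).
  { intros [y Hy]. unfold pullback. simpl. split.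
    - intros A. exists Hy. exact A.
    - intros [H' A]. replace Hy with H' by apply proof_irrelevance. exact A. }
  eapply homeo_trans.
  { apply sub_ext with (B := fun x => x <> z /\ pullback Z z _ h (fun y => P (proj1_sig y)) x).
    intros x. split; [intros [H A]; split; [exact H|exists H; exact A] | intros [_ A]; exact A]. }
  eapply homeo_trans; [apply homeo_sym; apply (sub_sub Z (fun x => x <> z) _ _ E1)|].
  eapply homeo_trans; [apply (sub_homeo _ _ _ h hi H1 H2 H3 H4)|].
  eapply homeo_trans.
  { apply sub_ext with (B := fun t => P (proj1_sig t)). intro t. rewrite H2. tauto. }
  apply sub_sub. tauto.
Qed.

Lemma pullback_open (Z : TopSpace) (z : Z) (S : R -> Prop) (h : card Z z -> subspace R_top S) P :
  t1 Z -> continuous _ _ h -> R_open P -> is_open Z (pullback Z z _ h (fun y => P (proj1_sig y))).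
Proof.
  intros T1 Hh HP. apply (open_from_sub Z _ _ h); auto.
  exists P. split; auto. tauto.
Qed.

Lemma pullback_minus_point (Z : TopSpace) (z w : Z) (Hwz : w <> z) (S : R -> Prop)
  (h : card Z z -> subspace R_top S) (hi : subspace R_top S -> card Z z) :
  (forall x, hi (h x) = x) -> forall (P : R -> Prop) x,
  pullback Z z _ h (fun y => P (proj1_sig y)) x /\ x <> w <->
  pullback Z z _ h (fun y => P (proj1_sig y) /\ proj1_sig y <> proj1_sig (h (exist _ w Hwz))) x.
Proof.
  intros H1 P x. unfold pullback. split.
  - intros [[H HP] Hxw]. exists H. split; auto. intro E. apply Hxw.
    assert (E' : h (exist _ x H) = h (exist (fun y => y <> z) w Hwz)) by (apply proj_inj; exact E).
    apply (f_equal hi) in E'. rewrite !H1 in E'. exact (f_equal (@proj1_sig _ _) E').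
  - intros [H [HP Hp]]. split; [exists H; exact HP|]. intro E. subst x. apply Hp.
    replace H with Hwz by apply proof_irrelevance. reflexivity.
Qed.

Lemma Sp_pullback_interval_closed b (Z : TopSpace) (z : Z) (h : card Z z -> subspace R_top (Sp b))
  (Vz : Z -> Prop) (a0 b0 : R) :
  t1 Z -> continuous _ _ h -> is_open Z Vz -> Vz z -> ~ Sp b a0 -> ~ Sp b b0 ->
  (forall x, Vz x -> ~ pullback Z z _ h (fun y => iv (Some a0) (Some b0) (proj1_sig y)) x) ->
  is_open Z (fun x => ~ pullback Z z _ h (fun y => iv (Some a0) (Some b0) (proj1_sig y)) x).
Proof.
  intros T1 Hh HVz Vzz Na0 Nb0 D.
  apply open_ext with (fun x => Vz x \/ pullback Z z _ h (fun y => proj1_sig y < a0 \/ b0 < proj1_sig y) x).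
  - apply open_or; auto. apply (pullback_open Z z _ h (fun t => t < a0 \/ b0 < t)); auto.
    apply (open_or R_top); [apply (open_ext R_top (iv None (Some a0))) | apply (open_ext R_top (iv (Some b0) None))];
      try apply iv_open; intro y; unfold iv; simpl; tauto.
  - intro x. split.
    + intros [Hx|[H Hq]]; [apply D; auto|]. unfold pullback, iv. simpl. intros [H' HP].
      replace H' with H in HP by apply proof_irrelevance.
      set (q := proj1_sig (h (exist _ x H))) in *.
      assert (Hq' : q < a0 \/ b0 < q) by exact Hq. assert (HP' : a0 < q < b0) by exact HP. lra.
    + intros nC. destruct (classic (x = z)) as [->|Hxz]; [left; auto|right].
      exists Hxz. set (y := h (exist _ x Hxz)).
      assert (Sy : Sp b (proj1_sig y)) by exact (proj2_sig y).
      destruct (Rtotal_order (proj1_sig y) a0) as [L|[L|L]];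
        [left; auto | rewrite L in Sy; contradiction |].
      destruct (Rtotal_order (proj1_sig y) b0) as [L'|[L'|L']];
        [| rewrite L' in Sy; contradiction | right; auto].
      exfalso. apply nC. exists Hxz. exact (conj L L').
Qed.

(* Main step for Q and P: in a Hausdorff space Z with Z \ {z} homeomorphic to
   S = Q or P, every point w <> z has a clopen neighbourhood C with C
   homeomorphic to C \ {w}, namely the pullback of a small interval around the
   image of w whose endpoints lie outside S. *)
Lemma Sp_absorbing_nbhd b (Z : TopSpace) (z w : Z) (Hwz : w <> z) :
  hausdorff Z -> homeomorphic (card Z z) (subspace R_top (Sp b)) ->
  exists C : Z -> Prop, is_open Z C /\ is_open Z (fun x => ~ C x) /\ C w /\
    homeomorphic (subspace Z C) (subspace Z (fun x => C x /\ x <> w)).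
Proof.
  intros HZ [h [hi [H1 [H2 [H3 H4]]]]].
  assert (T1 : t1 Z) by (apply hausdorff_t1; exact HZ).
  set (p := proj1_sig (h (exist _ w Hwz))).
  destruct (HZ w z Hwz) as [Vw [Vz [HVw [HVz [Vww [Vzz D]]]]]].
  destruct (open_to_sub Z _ _ hi Vw H4 HVw) as [O [HO EO]].
  assert (Op : O p) by (apply (EO (h (exist _ w Hwz))); rewrite H1; exact Vww).
  destruct (HO p Op) as [eps [Heps Beps]].
  destruct (nSp_between b (p - eps) p) as [a0 [[A0 A0'] Na0]]; [lra|].
  destruct (nSp_between b p (p + eps)) as [b0 [[B0 B0'] Nb0]]; [lra|].
  set (I := iv (Some a0) (Some b0)).
  assert (Ip : I p) by (unfold I, iv; simpl; lra).
  exists (pullback Z z _ h (fun y => I (proj1_sig y))). repeat split.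
  - apply (pullback_open Z z _ h I); auto. apply iv_open.
  - apply (Sp_pullback_interval_closed b Z z h Vz a0 b0); auto.
    intros x Hx [H HI]. apply (D x); auto. pose proof (EO (h (exist _ x H))) as E. rewrite H1 in E.
    apply E, Beps. set (q := proj1_sig (h (exist _ x H))).
    assert (Hq : a0 < q < b0) by exact HI. apply Rabs_def1; lra.
  - exists Hwz. exact Ip.
  - eapply homeo_trans; [apply (pullback_homeo Z z _ h hi H1 H2 H3 H4 I)|].
    eapply homeo_trans; [apply (Sp_interval_remove_point b _ _ p Ip)|].
    apply homeo_sym.
    eapply homeo_trans; [|apply (pullback_homeo Z z _ h hi H1 H2 H3 H4 (fun y => I y /\ y <> p))].
    apply sub_ext. apply (pullback_minus_point Z z w Hwz _ h hi H1 I).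
Qed.

Theorem Sp_reconstructible b : reconstructible (subspace R_top (Sp b)).
Proof.
  intros Z HZ.
  destruct (Sp_between b 0 1) as [s1 [[A1 A1'] S1]]; [lra|].
  destruct (Sp_between b 1 2) as [s2 [[A2 _] S2]]; [lra|].
  destruct (deck_card_right _ _ HZ (exist _ s1 S1)) as [z Hz].
  assert (HZS : homeomorphic (card Z z) (subspace R_top (Sp b)))
    by (eapply homeo_trans; [exact Hz| apply Sp_card_homeo]).
  destruct (card_two_points _ _ z HZS (exist _ s1 S1) (exist _ s2 S2)) as [a [c [Haz [Hcz Hac]]]].
  { intro E. apply (f_equal (@proj1_sig _ _)) in E. simpl in E. lra. }
  assert (HZH : hausdorff Z)
    by (apply (reconstruction_hausdorff Z _ HZ (hausdorff_sub _ _ R_hausdorff) z a c); auto).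
  destruct (Sp_absorbing_nbhd b Z z a Haz HZH HZS) as [C [OC [OnC [Ca HC]]]].
  destruct (deck_card_left _ _ HZ a) as [x Hx].
  eapply homeo_trans; [exact (absorb_point Z C a OC OnC Ca HC)|].
  eapply homeo_trans; [exact Hx| apply Sp_card_homeo].
Qed.

(** * Real analysis on subsets of R *)

Definition cont_on (D : R -> Prop) (f : R -> R) : Prop :=
  forall x, D x -> forall e, e > 0 -> exists d, d > 0 /\
    forall y, D y -> Rabs (y - x) < d -> Rabs (f y - f x) < e.

Lemma cont_on_sub D D' f : cont_on D f -> (forall x, D' x -> D x) -> cont_on D' f.
Proof.
  intros C S x Dx e He. destruct (C x (S x Dx) e He) as [d [Hd B]].
  exists d. split; auto.
Qed.

Lemma abs_le_inv x B : Rabs x <= B -> - B <= x <= B.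
Proof. unfold Rabs; destruct (Rcase_abs x); intros; split; lra. Qed.

Lemma abs_lt_inv x B : Rabs x < B -> - B < x < B.
Proof. unfold Rabs; destruct (Rcase_abs x); intros; split; lra. Qed.

(* Clamping to [a, b] extends a function continuous on [a, b] to R. *)
Definition clamp a b x := Rmax a (Rmin b x).

Lemma clamp_range a b x : a <= b -> a <= clamp a b x <= b.
Proof. intros. unfold clamp, Rmax, Rmin. repeat destruct (Rle_dec _ _); lra. Qed.

Lemma clamp_id a b x : a <= x <= b -> clamp a b x = x.
Proof. intros. unfold clamp, Rmax, Rmin. repeat destruct (Rle_dec _ _); lra. Qed.

Lemma clamp_lip a b x y : a <= b -> Rabs (clamp a b x - clamp a b y) <= Rabs (x - y).
Proof.
  intros. unfold clamp, Rmax, Rmin.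
  repeat destruct (Rle_dec _ _); unfold Rabs; repeat destruct (Rcase_abs _); lra.
Qed.

Lemma ivt_up a b f y : a <= b -> cont_on (fun x => a <= x <= b) f -> f a <= y <= f b ->
  exists c, a <= c <= b /\ f c = y.
Proof.
  intros Hab C [Y1 Y2].
  destruct (Req_dec (f a) y) as [E|E]; [exists a; split; auto; lra|].
  destruct (Req_dec (f b) y) as [E'|E']; [exists b; split; auto; lra|].
  assert (Hab' : a < b) by (destruct Hab; auto; subst; lra).
  set (F := fun x => f (clamp a b x) - y).
  assert (CF : continuity F).
  { intro x0. unfold continuity_pt, continue_in, limit1_in, limit_in. simpl. unfold R_dist.
    intros eps Heps.
    destruct (C (clamp a b x0) (clamp_range a b x0 Hab) eps Heps) as [d [Hd B]].
    exists d. split; auto. intros x [_ Hx]. unfold F.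
    replace (f (clamp a b x) - y - (f (clamp a b x0) - y)) with (f (clamp a b x) - f (clamp a b x0)) by ring.
    apply B; [apply clamp_range; auto|].
    pose proof (clamp_lip a b x x0 Hab). lra. }
  destruct (IVT F a b CF Hab') as [c [Hc Fc]].
  - unfold F. rewrite clamp_id; lra.
  - unfold F. rewrite clamp_id; lra.
  - exists c. split; auto. unfold F in Fc. rewrite clamp_id in Fc; auto. lra.
Qed.

Lemma ivt a b f y : a <= b -> cont_on (fun x => a <= x <= b) f ->
  (f a <= y <= f b \/ f b <= y <= f a) -> exists c, a <= c <= b /\ f c = y.
Proof.
  intros Hab C [Y|Y]; [apply ivt_up; auto|].
  destruct (ivt_up a b (fun x => - f x) (- y) Hab) as [c [Hc E]].
  - intros x Hx e He. destruct (C x Hx e He) as [d [Hd B]]. exists d. split; auto.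
    intros z Hz Hd'. replace (- f z - - f x) with (- (f z - f x)) by ring. rewrite Rabs_Ropp. auto.
  - lra.
  - exists c. split; auto. lra.
Qed.

Lemma no_sign_change f e : cont_on (fun t => 0 < t < e) f -> (forall t, 0 < t < e -> f t <> 0) ->
  forall t1 t2, 0 < t1 < e -> 0 < t2 < e -> f t1 < 0 -> 0 < f t2 -> False.
Proof.
  intros C NZ t1 t2 H1 H2 F1 F2.
  assert (K : forall a b, 0 < a < e -> 0 < b < e -> a <= b ->
            (f a <= 0 <= f b \/ f b <= 0 <= f a) -> False).
  { intros a b Ha Hb Hab Hs. destruct (ivt a b f 0 Hab) as [c [Hc E]]; auto.
    - eapply cont_on_sub; [exact C|]. intros x Hx. lra.
    - apply (NZ c); auto. lra. }
  destruct (Rle_dec t1 t2) as [L|L]; [apply (K t1 t2)|apply (K t2 t1)]; auto; lra.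
Qed.

Lemma cont_affine I J f al be : cont_on I f -> (forall t, J t -> I (al + t * be)) ->
  cont_on J (fun t => f (al + t * be)).
Proof.
  intros C S t0 Jt0 e He.
  destruct (C _ (S t0 Jt0) e He) as [d [Hd B]].
  pose proof (Rabs_pos be).
  exists (d / (Rabs be + 1)). split; [apply Rdiv_lt_0_compat; lra|].
  intros t Jt Ht. apply B; auto.
  replace (al + t * be - (al + t0 * be)) with ((t - t0) * be) by ring.
  rewrite Rabs_mult. pose proof (Rabs_pos (t - t0)).
  assert (Rabs (t - t0) * (Rabs be + 1) < d); [|nra].
  apply Rmult_lt_reg_r with (/ (Rabs be + 1)); [apply Rinv_0_lt_compat; lra|].
  rewrite Rmult_assoc, Rinv_r, Rmult_1_r; [exact Ht | lra].
Qed.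

Lemma cont_on_minus D f g : cont_on D f -> cont_on D g -> cont_on D (fun t => f t - g t).
Proof.
  intros Cf Cg x Dx e He.
  destruct (Cf x Dx (e/2)) as [d1 [Hd1 B1]]; [lra|]. destruct (Cg x Dx (e/2)) as [d2 [Hd2 B2]]; [lra|].
  exists (Rmin d1 d2). split; [unfold Rmin; destruct (Rle_dec _ _); lra|].
  intros y Dy Hd. assert (Rabs (y - x) < d1 /\ Rabs (y - x) < d2) as [A B]
    by (unfold Rmin in Hd; destruct (Rle_dec _ _); split; lra).
  specialize (B1 y Dy A). specialize (B2 y Dy B).
  pose proof (Rabs_triang (f y - f x) (- (g y - g x))) as T. rewrite Rabs_Ropp in T.
  replace (f y - g y - (f x - g x)) with (f y - f x + - (g y - g x)) by ring. lra.
Qed.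

Lemma convex_comb l r x a t : l < x < r -> l < a < r -> 0 <= t <= 1 -> l < x + t * (a - x) < r.
Proof.
  intros [A B] [C D] [E F].
  destruct (Req_dec t 0); [subst; split; lra|].
  assert (0 <= (1 - t) * (x - l)) by (apply Rmult_le_pos; lra).
  assert (0 <= (1 - t) * (r - x)) by (apply Rmult_le_pos; lra).
  assert (0 < t * (a - l)) by (apply Rmult_lt_0_compat; lra).
  assert (0 < t * (r - a)) by (apply Rmult_lt_0_compat; lra).
  split; nra.
Qed.

(* If it increased on x < y and decreased on a < b, the continuous
   difference f(y + t(b-y)) - f(x + t(a-x)) would vanish at some t in [0, 1],
   contradicting injectivity since the two moving points stay ordered. *)
Lemma inj_monotone l r f : cont_on (fun x => l < x < r) f ->
  (forall x y, l < x < r -> l < y < r -> f x = f y -> x = y) ->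
  (forall x y, l < x < r -> l < y < r -> x < y -> f x < f y) \/
  (forall x y, l < x < r -> l < y < r -> x < y -> f y < f x).
Proof.
  intros C Inj.
  assert (Strict : forall x y, l < x < r -> l < y < r -> f x <= f y -> x <> y -> f x < f y).
  { intros x y Hx Hy Hle Hne. destruct Hle as [Hlt|E]; auto. exfalso. apply Hne, Inj; auto. }
  destruct (classic (forall x y, l < x < r -> l < y < r -> x < y -> f x < f y)) as [H|H]; [left; auto|].
  right. intros x y Hx Hy Hxy.
  destruct (Rlt_le_dec (f y) (f x)) as [K|K]; auto. exfalso.
  apply Strict in K; auto; [|lra].
  apply H. intros a b Ha Hb Hab.
  destruct (Rlt_le_dec (f a) (f b)) as [K2|K2]; auto. exfalso.
  apply Strict in K2; auto; [|lra].
  set (G := fun t => f (y + t * (b - y)) - f (x + t * (a - x))).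
  assert (CG : cont_on (fun t => 0 <= t <= 1) G).
  { apply cont_on_minus; apply (cont_affine _ _ f _ _ C); intros t Ht; apply convex_comb; auto. }
  destruct (ivt 0 1 G 0) as [t [Ht E]]; [lra|auto| |].
  { unfold G. right. rewrite !Rmult_0_l, !Rmult_1_l, !Rplus_0_r.
    replace (y + (b - y)) with b by ring. replace (x + (a - x)) with a by ring. lra. }
  unfold G in E.
  assert (E' : y + t * (b - y) = x + t * (a - x))
    by (apply Inj; [apply convex_comb | apply convex_comb | ]; auto; lra).
  destruct (Req_dec t 0); [subst; lra|].
  assert (0 <= (1 - t) * (y - x)) by (apply Rmult_le_pos; lra).
  assert (0 < t * (b - a)) by (apply Rmult_lt_0_compat; lra).
  nra.
Qed.

Definition right_limit0 (e : R) (f : R -> R) (L : R) : Prop :=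
  forall eta, eta > 0 -> exists d, d > 0 /\ d <= e /\ forall t, 0 < t < d -> Rabs (f t - L) < eta.

Lemma increasing_limit f e m : e > 0 -> (forall s t, 0 < s < e -> 0 < t < e -> s < t -> f s < f t) ->
  (forall t, 0 < t < e -> m <= f t) -> exists L, right_limit0 e f L.
Proof.
  intros He Inc Bd.
  set (E := fun v => exists t, 0 < t < e /\ v = - f t).
  destruct (completeness E) as [M [HM1 HM2]].
  - exists (- m). intros v [t [Ht ->]]. specialize (Bd t Ht). lra.
  - exists (- f (e/2)). exists (e/2). split; auto. lra.
  - exists (- M). intros eta Heta.
    destruct (classic (exists t, 0 < t < e /\ - f t > M - eta)) as [[t0 [Ht0 Hf]]|NE].
    + exists t0. repeat split; try lra. intros t Ht.
      assert (- f t <= M) by (apply HM1; exists t; split; auto; lra).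
      assert (f t < f t0) by (apply Inc; lra).
      apply Rabs_def1; lra.
    + exfalso. assert (M <= M - eta); [|lra].
      apply HM2. intros v [t [Ht ->]]. destruct (Rle_dec (- f t) (M - eta)); auto.
      exfalso. apply NE. exists t. split; auto. lra.
Qed.

Lemma monotone_limit f e B : e > 0 ->
  ((forall s t, 0 < s < e -> 0 < t < e -> s < t -> f s < f t) \/
   (forall s t, 0 < s < e -> 0 < t < e -> s < t -> f t < f s)) ->
  (forall t, 0 < t < e -> Rabs (f t) <= B) -> exists L, right_limit0 e f L.
Proof.
  intros He [Inc|Dec] Bd.
  - apply (increasing_limit f e (- B)); auto. intros t Ht. specialize (Bd t Ht). apply abs_le_inv in Bd. lra.
  - destruct (increasing_limit (fun t => - f t) e (- B)) as [L HL]; auto.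
    + intros s t Hs Ht Hst. specialize (Dec s t Hs Ht Hst). lra.
    + intros t Ht. specialize (Bd t Ht). apply abs_le_inv in Bd. lra.
    + exists (- L). intros eta Heta. destruct (HL eta Heta) as [d [Hd [Hde Hb]]].
      exists d. repeat split; auto. intros t Ht. specialize (Hb t Ht).
      replace (f t - - L) with (- (- f t - L)) by ring. rewrite Rabs_Ropp. auto.
Qed.

Definition convex (I : R -> Prop) : Prop := forall a b c, I a -> I c -> a <= b <= c -> I b.

(* A convex set is connected: it does not split into two disjoint relatively
   open pieces.  The indicator of one piece would be continuous and take the
   value 1/2 by the intermediate value theorem. *)
Lemma convex_connected (I U V : R -> Prop) : convex I ->
  R_open U -> R_open V -> (forall x, I x -> U x \/ V x) -> (forall x, I x -> U x -> V x -> False) ->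
  forall a c, I a -> I c -> U a -> V c -> False.
Proof.
  intros Conv HU HV Cov Dis.
  assert (K : forall U V, R_open U -> R_open V -> (forall x, I x -> U x \/ V x) ->
            (forall x, I x -> U x -> V x -> False) ->
            forall a c, a < c -> I a -> I c -> U a -> V c -> False).
  { clear U V HU HV Cov Dis. intros U V HU HV Cov Dis a c Hac Ia Ic Ua Vc.
    set (chi := fun x => if excluded_middle_informative (U x) then 0 else 1).
    assert (Cc : cont_on (fun x => a <= x <= c) chi).
    { intros x Hx e He. assert (Ix : I x) by (apply (Conv a x c); auto).
      assert (Loc : exists d, d > 0 /\ forall y, a <= y <= c -> Rabs (y - x) < d -> (U y <-> U x)).
      { destruct (Cov x Ix) as [Ux|Vx].
        - destruct (HU x Ux) as [d [Hd B]]. exists d. split; auto. intros y _ Hy. split; auto.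
        - destruct (HV x Vx) as [d [Hd B]]. exists d. split; auto. intros y Hay Hy.
          assert (Iy : I y) by (apply (Conv a y c); auto).
          split; intro Hu; exfalso; [apply (Dis y)|apply (Dis x)]; auto. }
      destruct Loc as [d [Hd B]]. exists d. split; auto. intros y Hy Hd'.
      unfold chi. specialize (B y Hy Hd').
      destruct (excluded_middle_informative (U y)), (excluded_middle_informative (U x)); try tauto;
        rewrite Rminus_diag, Rabs_R0; auto. }
    destruct (ivt a c chi (1/2)) as [x [Hx E]]; [lra|auto| |].
    - left. unfold chi. destruct (excluded_middle_informative (U a)); [|contradiction].
      destruct (excluded_middle_informative (U c)); [exfalso; apply (Dis c); auto|]. split; lra.
    - unfold chi in E. destruct (excluded_middle_informative (U x)); lra. }
  intros a c Ia Ic Ua Vc.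
  destruct (Rtotal_order a c) as [H|[H|H]].
  - apply (K U V HU HV Cov Dis a c); auto.
  - subst. apply (Dis c); auto.
  - apply (K V U HV HU) with c a; auto.
    + intros x Ix. destruct (Cov x Ix); auto.
    + intros x Ix A B. apply (Dis x); auto.
Qed.

Lemma same_side_same_piece (x : R) (U V : R -> Prop) :
  R_open U -> R_open V -> (forall y, y <> x -> U y \/ V y) ->
  (forall y, y <> x -> U y -> V y -> False) ->
  forall a c, ((a < x /\ c < x) \/ (x < a /\ x < c)) -> U a -> V c -> False.
Proof.
  intros HU HV Cov Dis a c Hs Ua Vc.
  assert (Half : forall H : R -> Prop, convex H -> (forall y, H y -> y <> x) -> H a -> H c -> False).
  { intros H Conv Hx Ha Hc.
    apply (convex_connected H U V Conv HU HV (fun y Hy => Cov y (Hx y Hy)) (fun y Hy => Dis y (Hx y Hy)) a c);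
      auto. }
  destruct Hs as [[Ha Hc]|[Ha Hc]]; [apply (Half (fun y => y < x)) | apply (Half (fun y => x < y))];
    auto; try (intros p q r Hp Hr Hq; lra); intros y Hy; lra.
Qed.

(* R minus a point does not split into three disjoint nonempty open pieces:
   two of three witnesses lie on the same side of the point. *)
Lemma punctured_line_no_three_pieces (x : R) (A B C : R -> Prop) :
  R_open A -> R_open B -> R_open C ->
  (forall y, y <> x -> A y \/ B y \/ C y) ->
  (forall y, y <> x -> A y -> B y -> False) -> (forall y, y <> x -> A y -> C y -> False) ->
  (forall y, y <> x -> B y -> C y -> False) ->
  (exists y, y <> x /\ A y) -> (exists y, y <> x /\ B y) -> (exists y, y <> x /\ C y) -> False.
Proof.
  intros HA HB HC Cov DAB DAC DBC [a [Ha Aa]] [b [Hb Bb]] [c [Hc Cc]].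
  assert (BC : R_open (fun y => B y \/ C y)) by (apply (open_or R_top); auto).
  assert (AC : R_open (fun y => A y \/ C y)) by (apply (open_or R_top); auto).
  (* Splittings A | B u C and B | A u C of R \ {x}. *)
  assert (CovA : forall y, y <> x -> A y \/ (B y \/ C y)) by exact Cov.
  assert (CovB : forall y, y <> x -> B y \/ (A y \/ C y)) by (intros y Hy; specialize (Cov y Hy); tauto).
  assert (DisA : forall y, y <> x -> A y -> B y \/ C y -> False)
    by (intros y Hy Ay [By|Cy]; eauto).
  assert (DisB : forall y, y <> x -> B y -> A y \/ C y -> False)
    by (intros y Hy By [Ay|Cy]; eauto).
  pose proof (same_side_same_piece x A _ HA BC CovA DisA a b) as SAB.
  pose proof (same_side_same_piece x A _ HA BC CovA DisA a c) as SAC.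
  pose proof (same_side_same_piece x B _ HB AC CovB DisB b c) as SBC.
  destruct (Rtotal_order a x) as [La|[La|La]]; [|contradiction|];
  destruct (Rtotal_order b x) as [Lb|[Lb|Lb]]; try contradiction;
  destruct (Rtotal_order c x) as [Lc|[Lc|Lc]]; try contradiction; unfold Rgt in *; tauto.
Qed.

Lemma right_limit0_bounds e f L a b : e > 0 -> right_limit0 e f L ->
  (forall t, 0 < t < e -> a <= f t <= b) -> a <= L <= b.
Proof.
  intros He Lim Bd. split; apply Rnot_lt_le; intro K.
  - destruct (Lim (a - L)) as [d [Hd [Hde B]]]; [lra|].
    specialize (B (d/2) ltac:(lra)). specialize (Bd (d/2) ltac:(lra)). apply abs_lt_inv in B. lra.
  - destruct (Lim (L - b)) as [d [Hd [Hde B]]]; [lra|].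
    specialize (B (d/2) ltac:(lra)). specialize (Bd (d/2) ltac:(lra)). apply abs_lt_inv in B. lra.
Qed.

Lemma right_limit0_distances e f L t0 : cont_on (fun t => 0 < t < e) f -> right_limit0 e f L ->
  0 < t0 < e -> forall r, 0 < r < Rabs (f t0 - L) -> exists tau, 0 < tau <= t0 /\ Rabs (f tau - L) = r.
Proof.
  intros C Lim Ht0 r [R1 R2].
  destruct (Lim r R1) as [d [Hd [Hde B]]].
  set (t1 := Rmin d t0 / 2).
  assert (T1 : 0 < t1 < d /\ t1 < t0) by (unfold t1, Rmin; destruct (Rle_dec _ _); repeat split; lra).
  destruct (ivt t1 t0 (fun tau => Rabs (f tau - L)) r) as [tau [Htau E]].
  - lra.
  - intros x Hx e' He'. destruct (C x ltac:(lra) e' He') as [dd [Hdd Bdd]].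
    exists dd. split; auto. intros y Hy Hyx.
    pose proof (Rabs_triang_inv2 (f y - L) (f x - L)) as T.
    replace (f y - L - (f x - L)) with (f y - f x) in T by ring.
    specialize (Bdd y ltac:(lra) Hyx). lra.
  - left. split; [specialize (B t1 ltac:(lra)); lra| lra].
  - exists tau. split; [lra| exact E].
Qed.

(** * Real charts of punctured spaces *)

(* A homeomorphism from Z \ {z} onto an open set S of reals, presented by
   total maps (values at z and outside S are irrelevant). *)
Record chart (Z : TopSpace) (z : Z) (S : R -> Prop) := {
  chart_to : Z -> R;
  chart_from : R -> Z;
  chart_in : forall y, y <> z -> S (chart_to y);
  chart_avoid : forall t, S t -> chart_from t <> z;
  chart_from_to : forall y, y <> z -> chart_from (chart_to y) = y;
  chart_to_from : forall t, S t -> chart_to (chart_from t) = t;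
  chart_open_to : forall O, R_open O -> is_open Z (fun y => y <> z /\ O (chart_to y));
  chart_open_from : forall U, is_open Z U -> R_open (fun t => S t /\ U (chart_from t)) }.

Arguments chart_to {Z z S}.
Arguments chart_from {Z z S}.
Arguments chart_in {Z z S}.
Arguments chart_avoid {Z z S}.
Arguments chart_from_to {Z z S}.
Arguments chart_to_from {Z z S}.
Arguments chart_open_to {Z z S}.
Arguments chart_open_from {Z z S}.

Lemma chart_of_card (Z : TopSpace) (z : Z) (S : R -> Prop) : t1 Z -> R_open S ->
  homeomorphic (card Z z) (subspace R_top S) -> inhabited (chart Z z S).
Proof.
  intros T1 HS [h [hi [H1 [H2 [H3 H4]]]]].
  pose (to := fun y : Z => match excluded_middle_informative (y <> z) with
              | left H => proj1_sig (h (exist _ y H)) | right _ => 0 end).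
  pose (from := fun t : R => match excluded_middle_informative (S t) with
              | left H => proj1_sig (hi (exist _ t H)) | right _ => z end).
  assert (to_spec : forall y (H : y <> z), to y = proj1_sig (h (exist _ y H))).
  { intros y H. unfold to. destruct (excluded_middle_informative (y <> z)) as [H'|H']; [|contradiction].
    replace H' with H by apply proof_irrelevance. reflexivity. }
  assert (from_spec : forall t (H : S t), from t = proj1_sig (hi (exist _ t H))).
  { intros t H. unfold from. destruct (excluded_middle_informative (S t)) as [H'|H']; [|contradiction].
    replace H' with H by apply proof_irrelevance. reflexivity. }
  assert (to_in : forall y, y <> z -> S (to y)).
  { intros y H. rewrite (to_spec y H). exact (proj2_sig (h (exist _ y H))). }
  assert (from_avoid : forall t, S t -> from t <> z).
  { intros t H. rewrite (from_spec t H). exact (proj2_sig (hi (exist _ t H))). }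
  constructor. apply (Build_chart Z z S to from to_in from_avoid).
  - intros y H. rewrite (from_spec _ (to_in y H)).
    erewrite (proj_inj _ (h (exist _ y H))) by (simpl; apply to_spec).
    rewrite H1. reflexivity.
  - intros t H. rewrite (to_spec _ (from_avoid t H)).
    erewrite (proj_inj _ (hi (exist _ t H))) by (simpl; apply from_spec).
    rewrite H2. reflexivity.
  - intros O HO. eapply open_ext; [apply (open_from_sub Z _ _ h (fun t => O (proj1_sig t)) (T1 z) H3)|].
    + exists O. split; auto. tauto.
    + intro y. split.
      * intros [H E]. split; auto. rewrite (to_spec y H). exact E.
      * intros [H E]. exists H. rewrite <- (to_spec y H). exact E.
  - intros U HU. destruct (open_to_sub Z _ _ hi U H4 HU) as [O [HO EO]].
    apply (open_ext R_top (fun t => S t /\ O t)); [apply (open_inter R_top); auto|].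
    intro t. split; intros [H E]; split; auto; rewrite (from_spec t H) in *; apply (EO (exist _ t H)); exact E.
Qed.

Lemma chart_to_inj (Z : TopSpace) (z : Z) S (K : chart Z z S) y1 y2 :
  y1 <> z -> y2 <> z -> chart_to K y1 = chart_to K y2 -> y1 = y2.
Proof. intros A B E. rewrite <- (chart_from_to K y1 A), <- (chart_from_to K y2 B), E. reflexivity. Qed.

Lemma R_open_ne x : R_open (fun t => t <> x).
Proof.
  apply (open_ext R_top (punctured None x None)); [apply punctured_open|].
  intro t. rewrite punctured_spec by (split; exact I). unfold iv; simpl. tauto.
Qed.

Lemma chart_no_three_pieces (Z : TopSpace) (v : Z) (x : R) (K : chart Z v (fun t => t <> x)) :
  forall A B C : Z -> Prop, is_open Z A -> is_open Z B -> is_open Z C ->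
  (forall y, y <> v -> A y \/ B y \/ C y) ->
  (forall y, A y -> B y -> False) -> (forall y, A y -> C y -> False) -> (forall y, B y -> C y -> False) ->
  (exists y, y <> v /\ A y) -> (exists y, y <> v /\ B y) -> (exists y, y <> v /\ C y) -> False.
Proof.
  intros A B C HA HB HC Cov DAB DAC DBC EA EB EC.
  set (pull := fun P : Z -> Prop => fun t => t <> x /\ P (chart_from K t)).
  assert (Wit : forall P : Z -> Prop, (exists y, y <> v /\ P y) -> exists t, t <> x /\ pull P t).
  { intros P [y [Hy Py]]. exists (chart_to K y).
    assert (Ht : chart_to K y <> x) by exact (chart_in K y Hy).
    split; auto. split; auto. rewrite (chart_from_to K y Hy). exact Py. }
  apply (punctured_line_no_three_pieces x (pull A) (pull B) (pull C));
    try apply (chart_open_from K); auto; try (apply Wit; auto).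
  - intros t Ht. destruct (Cov _ (chart_avoid K t Ht)) as [?|[?|?]]; unfold pull; tauto.
  - intros t _ [_ P] [_ Q]. eauto.
  - intros t _ [_ P] [_ Q]. eauto.
  - intros t _ [_ P] [_ Q]. eauto.
Qed.

Definition W (t : R) : Prop := (-1 < t /\ t < 0) \/ (0 < t /\ t < 1).

Lemma W_iff t : W t <-> (-1 < t < 1 /\ t <> 0).
Proof. unfold W. split; [intros [[A B]|[A B]]; split; try split; lra|]. intros [[A B] C].
  destruct (Rtotal_order t 0) as [L|[L|L]]; [left|contradiction|right]; lra. Qed.

Lemma R_open_W : R_open W.
Proof.
  apply (open_ext R_top (punctured (Some (-1)) 0 (Some 1))); [apply punctured_open|].
  intro t. unfold punctured, iv, W; simpl. tauto.
Qed.

Lemma R_card_W x : homeomorphic (card R_top x) (subspace R_top W).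
Proof.
  destruct (punctured_order_iso None x None (Some (-1)) 0 (Some 1)) as [f [M _]];
    [split; exact I | unfold iv; simpl; lra |].
  eapply homeo_trans.
  { apply (sub_ext R_top _ (fun y => True /\ punctured None x None y)). intro y.
    rewrite punctured_spec by (split; exact I). unfold iv; simpl. tauto. }
  eapply homeo_trans.
  { exact (order_iso_homeo (fun _ => True) _ _ f (punctured_open _ _ _) (punctured_open _ _ _) M
             (fun _ _ => iff_refl _)). }
  apply sub_ext. intro y. unfold punctured, iv, W; simpl. tauto.
Qed.

Lemma lip_preimage_open (D : R -> Prop) (k : R -> R) : R_open D ->
  (forall t0, D t0 -> exists r, r > 0 /\ forall t, Rabs (t - t0) < r -> Rabs (k t - k t0) <= Rabs (t - t0)) ->
  forall U, R_open U -> R_open (fun t => D t /\ U (k t)).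
Proof.
  intros HD Hk U HU t0 [Dt0 Ut0].
  destruct (HD t0 Dt0) as [d1 [Hd1 B1]]. destruct (Hk t0 Dt0) as [r [Hr Br]].
  destruct (HU _ Ut0) as [e [He Be]].
  exists (Rmin d1 (Rmin r e)). split; [unfold Rmin; repeat destruct (Rle_dec _ _); lra|].
  intros t Ht.
  assert (Rabs (t - t0) < d1 /\ Rabs (t - t0) < r /\ Rabs (t - t0) < e) as [A [B C]]
    by (unfold Rmin in Ht; repeat destruct (Rle_dec _ _); repeat split; lra).
  split; auto. apply Be. specialize (Br t B). lra.
Qed.

(* Folding each half of W so that the endpoint Lp of (0, 1) and the endpoint
   Ln of (-1, 0) become 0: an involution of W. *)
Section Fold.
Variables Lp Ln : R.
Hypothesis HLp : Lp = 0 \/ Lp = 1.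
Hypothesis HLn : Ln = 0 \/ Ln = -1.

Definition fold (t : R) : R := if Rlt_dec 0 t then Rabs (t - Lp) else - Rabs (t - Ln).

Lemma fold_pos t : 0 < t -> fold t = Rabs (t - Lp).
Proof. intros H. unfold fold. destruct (Rlt_dec 0 t); [reflexivity|contradiction]. Qed.

Lemma fold_nonpos t : t <= 0 -> fold t = - Rabs (t - Ln).
Proof. intros H. unfold fold. destruct (Rlt_dec 0 t); [lra|reflexivity]. Qed.

Lemma fold_W t : W t -> W (fold t) /\ (0 < t <-> 0 < fold t).
Proof.
  intros [[A B]|[A B]]; [rewrite fold_nonpos by lra | rewrite fold_pos by lra];
    [destruct HLn as [-> | ->] | destruct HLp as [-> | ->]];
    unfold Rabs, W; destruct (Rcase_abs _); (split; [lra | split; intros; lra]).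
Qed.

Lemma fold_involutive t : W t -> fold (fold t) = t.
Proof.
  intros Wt. destruct (fold_W t Wt) as [Wf Pf].
  destruct Wt as [[A B]|[A B]].
  - assert (fold t <= 0) by (destruct (Rle_dec (fold t) 0) as [|N]; [auto|]; assert (0 < t) by (apply Pf; lra); lra).
    rewrite (fold_nonpos (fold t)) by auto. rewrite (fold_nonpos t) in * by lra.
    destruct HLn as [-> | ->]; unfold Rabs in *; repeat destruct (Rcase_abs _); lra.
  - rewrite (fold_pos (fold t)) by (apply Pf; lra). rewrite (fold_pos t) in * by lra.
    destruct HLp as [-> | ->]; unfold Rabs in *; repeat destruct (Rcase_abs _); lra.
Qed.

Lemma fold_preimage_open U : R_open U -> R_open (fun t => W t /\ U (fold t)).
Proof.
  apply lip_preimage_open; [apply R_open_W|]. intros t0 W0. exists (Rabs t0). split.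
  - apply Rabs_pos_lt. intro E. rewrite E in W0. destruct W0 as [[A B]|[A B]]; lra.
  - intros t Ht. destruct W0 as [[A B]|[A B]].
    + rewrite (Rabs_left t0) in Ht by lra. apply abs_lt_inv in Ht.
      rewrite (fold_nonpos t), (fold_nonpos t0) by lra.
      replace (- Rabs (t - Ln) - - Rabs (t0 - Ln)) with (- (Rabs (t - Ln) - Rabs (t0 - Ln))) by ring.
      rewrite Rabs_Ropp. pose proof (Rabs_triang_inv2 (t - Ln) (t0 - Ln)) as T.
      replace (t - Ln - (t0 - Ln)) with (t - t0) in T by ring. exact T.
    + rewrite (Rabs_right t0) in Ht by lra. apply abs_lt_inv in Ht.
      rewrite (fold_pos t), (fold_pos t0) by lra.
      pose proof (Rabs_triang_inv2 (t - Lp) (t0 - Lp)) as T.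
      replace (t - Lp - (t0 - Lp)) with (t - t0) in T by ring. exact T.
Qed.

End Fold.

Lemma glue_point_homeo (Z : TopSpace) (z : Z) (D : R -> Prop) (c : R) (f : Z -> R) (F : R -> Z) :
  f z = c -> F c = z ->
  (forall y, D (f y)) -> (forall y, F (f y) = y) -> (forall t, D t -> f (F t) = t) ->
  (forall O, R_open O -> is_open Z (fun y => y <> z /\ O (f y))) ->
  (forall eta, eta > 0 -> exists V, is_open Z V /\ V z /\ forall y, V y -> Rabs (f y - c) < eta) ->
  (forall U, is_open Z U -> R_open (fun t => D t /\ t <> c /\ U (F t))) ->
  (forall U, is_open Z U -> U z -> exists eta, eta > 0 /\ forall t, D t -> Rabs (t - c) < eta -> U (F t)) ->
  homeomorphic Z (subspace R_top D).
Proof.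
  intros fz Fc fD Ff fF Off_z At_z Off_c At_c.
  exists (fun y => exist D (f y) (fD y)), (fun t => F (proj1_sig t)). repeat split.
  - exact Ff.
  - intros [t Ht]. apply proj_inj. simpl. auto.
  - intros V [U [HU EU]].
    apply open_ext with (fun y => U (f y)); [| intro y; rewrite (EU (exist _ (f y) (fD y))); simpl; tauto].
    apply open_local. intros y0 Uy0. destruct (classic (y0 = z)) as [->|Hne].
    + rewrite fz in Uy0. destruct (HU c Uy0) as [eta [Heta Beta]].
      destruct (At_z eta Heta) as [V' [HV' [V'z B]]]. exists V'. auto.
    + exists (fun y => y <> z /\ U (f y)). split; [apply Off_z; auto|]. split; [auto|tauto].
  - intros U HU.
    exists (fun t => (D t /\ t <> c /\ U (F t)) \/ (U z /\ exists eta, eta > 0 /\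
               (forall s, D s -> Rabs (s - c) < eta -> U (F s)) /\ Rabs (t - c) < eta)). split.
    + apply (open_or R_top); [apply Off_c; auto|]. intros t [Uz [eta [Heta [B Ht]]]].
      destruct (ball_open c eta t Ht) as [d [Hd Bd]]. exists d. split; auto.
      intros y Hy. split; auto. exists eta. auto.
    + intros [t Ht]. simpl. split.
      * intros Ut. destruct (Req_dec t c) as [->|Hne]; [right|left; auto].
        rewrite Fc in Ut. destruct (At_c U HU Ut) as [eta [Heta B]].
        split; auto. exists eta. rewrite Rminus_diag, Rabs_R0. auto.
      * intros [[_ [_ Ut]]|[_ [eta [_ [B Ht']]]]]; auto.
Qed.

(** * R is reconstructible *)

Definition unit_sign (sg : R) : Prop := sg = 1 \/ sg = -1.

Lemma unit_sign_abs sg : unit_sign sg -> Rabs sg = 1.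
Proof. intros [-> | ->]; unfold Rabs; destruct (Rcase_abs _); lra. Qed.

Lemma unit_sign_dist s sg tau : unit_sign sg -> 0 <= tau -> Rabs (s + tau * sg - s) = tau.
Proof.
  intros Hs Ht. replace (s + tau * sg - s) with (tau * sg) by ring.
  rewrite Rabs_mult, (unit_sign_abs sg Hs), Rmult_1_r. apply Rabs_right. lra.
Qed.

Lemma scaled_strip_open sg p q : unit_sign sg -> R_open (fun t => p < sg * t < q).
Proof.
  intros Hs t [A B]. exists (Rmin (sg * t - p) (q - sg * t)). split.
  - unfold Rmin; destruct (Rle_dec _ _); lra.
  - intros u Hu. apply abs_lt_inv in Hu. unfold Rmin in Hu. destruct (Rle_dec _ _); destruct Hs; subst; split; lra.
Qed.

Lemma W_limit_pos e f L : e > 0 -> right_limit0 e f L ->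
  (forall t, 0 < t < e -> W (f t) /\ 0 < f t) -> ~ W L -> L = 0 \/ L = 1.
Proof.
  intros He Lim Hf NW.
  assert (0 <= L <= 1).
  { apply (right_limit0_bounds e f L 0 1 He Lim). intros t Ht.
    destruct (Hf t Ht) as [[[A B]|[A B]] P]; lra. }
  destruct (Req_dec L 0); auto. destruct (Req_dec L 1); auto.
  exfalso. apply NW. right. lra.
Qed.

Lemma W_limit_neg e f L : e > 0 -> right_limit0 e f L ->
  (forall t, 0 < t < e -> W (f t) /\ f t < 0) -> ~ W L -> L = 0 \/ L = -1.
Proof.
  intros He Lim Hf NW.
  assert (-1 <= L <= 0).
  { apply (right_limit0_bounds e f L (-1) 0 He Lim). intros t Ht.
    destruct (Hf t Ht) as [[[A B]|[A B]] P]; lra. }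
  destruct (Req_dec L 0); auto. destruct (Req_dec L (-1)); auto.
  exfalso. apply NW. left. lra.
Qed.

(* G is a chart around z, centred at s = G z; along the two sides of s it
   gives the paths tau |-> H (G^-1 (s +/- tau)) in W. *)
Section RealReconstruction.
Variable Z : TopSpace.
Hypothesis Z_hausdorff : hausdorff Z.
Variables (z w : Z) (x1 : R).
Hypothesis w_z : w <> z.
Variable H : chart Z z W.
Variable G : chart Z w (fun t => t <> x1).
Hypothesis card_charts : forall v : Z, exists x, inhabited (chart Z v (fun t => t <> x)).

Let s := chart_to G z.
Let eps := Rabs (s - x1).

Lemma s_ne_x1 : s <> x1.
Proof. exact (chart_in G z (fun e => w_z (eq_sym e))). Qed.

Lemma eps_pos : eps > 0.
Proof. apply Rabs_pos_lt. pose proof s_ne_x1. lra. Qed.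

Lemma chart_from_s : chart_from G s = z.
Proof. apply (chart_from_to G). intro e. apply w_z. symmetry. exact e. Qed.

Lemma near_s sg tau : unit_sign sg -> 0 < tau < eps ->
  s + tau * sg <> x1 /\ chart_from G (s + tau * sg) <> z.
Proof.
  intros Hs Ht. pose proof (unit_sign_dist s sg tau Hs ltac:(lra)) as D.
  assert (Hx : s + tau * sg <> x1).
  { intro E. rewrite E in D. unfold eps in Ht. rewrite <- Rabs_Ropp in Ht.
    replace (- (s - x1)) with (x1 - s) in Ht by ring. lra. }
  split; auto. intro E.
  assert (E' : s + tau * sg = s) by (rewrite <- (chart_to_from G _ Hx), E; reflexivity).
  rewrite E', Rminus_diag, Rabs_R0 in D. lra.
Qed.

Lemma G_ball_open d : is_open Z (fun y => y <> w /\ Rabs (chart_to G y - s) < d).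
Proof. apply (chart_open_to G (fun t => Rabs (t - s) < d)), ball_open. Qed.

Definition path (sg tau : R) : R := chart_to H (chart_from G (s + tau * sg)).

Lemma path_W sg tau : unit_sign sg -> 0 < tau < eps -> W (path sg tau).
Proof. intros Hs Ht. apply (chart_in H), near_s; auto. Qed.

Lemma path_back sg tau : unit_sign sg -> 0 < tau < eps ->
  chart_from H (path sg tau) = chart_from G (s + tau * sg).
Proof. intros Hs Ht. apply (chart_from_to H), near_s; auto. Qed.

Lemma path_inj sg t1 t2 : unit_sign sg -> 0 < t1 < eps -> 0 < t2 < eps -> path sg t1 = path sg t2 -> t1 = t2.
Proof.
  intros Hs A B E. destruct (near_s sg t1 Hs A) as [X1 Z1]. destruct (near_s sg t2 Hs B) as [X2 Z2].
  apply (chart_to_inj Z z W H) in E; auto.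
  apply (f_equal (chart_to G)) in E. rewrite !(chart_to_from G) in E by auto.
  destruct Hs as [-> | ->]; lra.
Qed.

Lemma path_cont sg : unit_sign sg -> cont_on (fun tau => 0 < tau < eps) (path sg).
Proof.
  intros Hs tau0 Ht0 e He.
  set (U := fun y => y <> z /\ Rabs (chart_to H y - path sg tau0) < e).
  assert (HU : is_open Z U) by apply (chart_open_to H (fun t => Rabs (t - path sg tau0) < e)), ball_open.
  destruct (chart_open_from G U HU (s + tau0 * sg)) as [d [Hd Bd]].
  { destruct (near_s sg tau0 Hs Ht0) as [X0 Z0]. split; auto. split; auto.
    rewrite Rminus_diag, Rabs_R0. exact He. }
  exists d. split; auto. intros tau Ht Htau.
  destruct (Bd (s + tau * sg)) as [_ [_ B]]; [|exact B].
  replace (s + tau * sg - (s + tau0 * sg)) with ((tau - tau0) * sg) by ring.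
  rewrite Rabs_mult, (unit_sign_abs sg Hs), Rmult_1_r. exact Htau.
Qed.

(* Each path is monotone and bounded, hence converges at tau = 0. *)
Lemma path_limit sg : unit_sign sg -> exists L, right_limit0 eps (path sg) L.
Proof.
  intros Hs. apply (monotone_limit (path sg) eps 1 eps_pos).
  - apply inj_monotone; [apply path_cont; auto|]. intros; apply (path_inj sg); auto.
  - intros t Ht. destruct (path_W sg t Hs Ht) as [[A B]|[A B]]; unfold Rabs; destruct (Rcase_abs _); lra.
Qed.

(* The limit is not in W: otherwise its H-preimage and z, both limits of the
   path in Z, could not be separated. *)
Lemma path_limit_not_W sg L : unit_sign sg -> right_limit0 eps (path sg) L -> ~ W L.
Proof.
  intros Hs Lim WL.
  destruct (Z_hausdorff (chart_from H L) z (chart_avoid H L WL)) as [Uy [Uz [HUy [HUz [Uyy [Uzz D]]]]]].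
  destruct (chart_open_from H Uy HUy L) as [eta [Heta Beta]]; [split; auto|].
  destruct (chart_open_from G Uz HUz s) as [del [Hdel Bdel]]; [split; [apply s_ne_x1 | rewrite chart_from_s; auto]|].
  destruct (Lim eta Heta) as [d [Hd [Hde Bd]]].
  set (tau := Rmin d del / 2).
  assert (Ht : 0 < tau < d /\ tau < del) by (unfold tau, Rmin; destruct (Rle_dec d del); repeat split; lra).
  destruct Ht as [[T1 T2] T3].
  destruct (Bdel (s + tau * sg)) as [_ Uz']; [rewrite unit_sign_dist; auto; lra|].
  destruct (Beta (path sg tau)) as [_ Uy']; [apply Bd; lra|].
  rewrite path_back in Uy' by (auto; lra). exact (D _ Uy' Uz').
Qed.

Lemma path_sign sg : unit_sign sg ->
  (forall tau, 0 < tau < eps -> 0 < path sg tau) \/ (forall tau, 0 < tau < eps -> path sg tau < 0).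
Proof.
  intros Hs.
  assert (NZ : forall t, 0 < t < eps -> path sg t <> 0) by (intros t Tt; destruct (path_W sg t Hs Tt); lra).
  destruct (classic (exists tau, 0 < tau < eps /\ path sg tau < 0)) as [[t1 [T1 F1]]|N].
  - right. intros tau Ht. destruct (Rlt_le_dec (path sg tau) 0) as [|K]; auto.
    exfalso. apply (no_sign_change (path sg) eps (path_cont sg Hs) NZ t1 tau); auto.
    destruct K; auto. exfalso. exact (NZ tau Ht (eq_sym H0)).
  - left. intros tau Ht. destruct (Rlt_le_dec 0 (path sg tau)) as [|K]; auto.
    exfalso. destruct K as [K|K]; [apply N; exists tau; auto | exact (NZ tau Ht K)].
Qed.

Lemma near_z_on_path y : y <> z -> y <> w -> Rabs (chart_to G y - s) < eps ->
  exists sg tau, unit_sign sg /\ 0 < tau < eps /\ chart_to H y = path sg tau /\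
                 Rabs (chart_to G y - s) = tau.
Proof.
  intros Hyz Hyw Hd.
  assert (Ne : chart_to G y <> s).
  { intro E. apply Hyz. rewrite <- (chart_from_to G y Hyw), E. apply chart_from_s. }
  assert (Back : forall sg tau, chart_to G y = s + tau * sg -> chart_to H y = path sg tau).
  { intros sg tau E. unfold path. rewrite <- E, (chart_from_to G y Hyw). reflexivity. }
  destruct (Rlt_le_dec s (chart_to G y)) as [L|L].
  - rewrite Rabs_right in Hd by lra.
    exists 1, (chart_to G y - s). repeat split; [left; auto | lra | lra | | rewrite Rabs_right; lra].
    apply Back. ring.
  - assert (chart_to G y < s) by (destruct L; auto; contradiction).
    rewrite Rabs_left in Hd by lra.
    exists (-1), (s - chart_to G y). repeat split; [right; auto | lra | lra | | rewrite Rabs_left; lra].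
    apply Back. ring.
Qed.

Lemma chart_point (t t' : R) (P : R -> Prop) : W t -> W t' -> t <> t' -> P t ->
  exists y, y <> chart_from H t' /\ y <> z /\ P (chart_to H y).
Proof.
  intros Wt Wt' Ht Pt. exists (chart_from H t). rewrite (chart_to_from H t Wt).
  repeat split; [|apply (chart_avoid H); auto | auto].
  intro E. apply Ht. rewrite <- (chart_to_from H t Wt), <- (chart_to_from H t' Wt'), E. reflexivity.
Qed.

(* If both paths enter the half o of W, then z together with that half is
   open: near z all points lie on the paths. *)
Lemma half_with_z_open o : unit_sign o ->
  (forall sg, unit_sign sg -> forall tau, 0 < tau < eps -> 0 < o * path sg tau) ->
  is_open Z (fun y => y = z \/ (y <> z /\ 0 < o * chart_to H y < 2)).
Proof.
  intros Ho ALL. apply open_local. intros y0 Hy0. destruct (classic (y0 = z)) as [->|Hne].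
  - exists (fun y => y <> w /\ Rabs (chart_to G y - s) < eps). split; [apply G_ball_open|]. split.
    + split; [intro e; apply w_z; auto|]. rewrite Rminus_diag, Rabs_R0. apply eps_pos.
    + intros y [Hyw Hd]. destruct (classic (y = z)) as [->|Hyz]; [left; auto|right].
      split; auto. destruct (near_z_on_path y Hyz Hyw Hd) as [sg [tau [Hs [Ht [E _]]]]].
      rewrite E. split; [apply ALL; auto|].
      destruct (path_W sg tau Hs Ht) as [[A B]|[A B]]; destruct Ho as [-> | ->]; lra.
  - exists (fun y => y <> z /\ 0 < o * chart_to H y < 2).
    split; [apply (chart_open_to H (fun t => 0 < o * t < 2)), scaled_strip_open; auto|].
    split; [destruct Hy0; [contradiction|auto] | intros y Hy; right; exact Hy].
Qed.

(* The two paths do not enter the same half of W: otherwise removing a point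
   v of the other half would split Z \ {v} into three open pieces (the outer
   and inner part of that half, and z together with the first half), while
   the card Z \ {v} is a punctured line. *)
Lemma paths_not_same_half o : unit_sign o ->
  ~ (forall sg, unit_sign sg -> forall tau, 0 < tau < eps -> 0 < o * path sg tau).
Proof.
  intros Ho ALL.
  assert (Wv : W (- o / 2)) by (unfold W; destruct Ho as [-> | ->]; lra).
  set (v := chart_from H (- o / 2)).
  destruct (card_charts v) as [x2 [K]].
  assert (HB : forall y, y <> z -> -1 < o * chart_to H y < 1 /\ o * chart_to H y <> 0).
  { intros y Hy. destruct (chart_in H y Hy) as [[A B]|[A B]]; destruct Ho as [-> | ->]; split; try split; lra. }
  apply (chart_no_three_pieces Z v x2 K
    (fun y => y <> z /\ -2 < o * chart_to H y < -1/2)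
    (fun y => y <> z /\ -1/2 < o * chart_to H y < 0)
    (fun y => y = z \/ (y <> z /\ 0 < o * chart_to H y < 2))).
  - apply (chart_open_to H (fun t => -2 < o * t < -1/2)), scaled_strip_open; auto.
  - apply (chart_open_to H (fun t => -1/2 < o * t < 0)), scaled_strip_open; auto.
  - apply half_with_z_open; auto.
  - intros y Hyv. destruct (classic (y = z)) as [->|Hyz]; [right; right; left; auto|].
    destruct (HB y Hyz) as [[A B] C].
    destruct (Rtotal_order (o * chart_to H y) (-1/2)) as [L|[L|L]].
    + left. split; auto; lra.
    + exfalso. apply Hyv. unfold v. rewrite <- (chart_from_to H y Hyz). f_equal.
      destruct Ho as [-> | ->]; lra.
    + destruct (Rtotal_order (o * chart_to H y) 0) as [L'|[L'|L']].
      * right; left. split; auto; lra.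
      * contradiction.
      * right; right; right. split; auto; lra.
  - intros y [_ A] [_ B]. lra.
  - intros y [Hyz A] [E|[_ B]]; [contradiction|lra].
  - intros y [Hyz A] [E|[_ B]]; [contradiction|lra].
  - destruct (chart_point (- 3 * o / 4) (- o / 2) (fun u => -2 < o * u < -1/2)) as [y [Hv [Hz P]]];
      try (unfold W; destruct Ho as [-> | ->]; lra); auto. exists y. auto.
  - destruct (chart_point (- o / 4) (- o / 2) (fun u => -1/2 < o * u < 0)) as [y [Hv [Hz P]]];
      try (unfold W; destruct Ho as [-> | ->]; lra); auto. exists y. auto.
  - exists z. split; [|left; auto]. intro E. apply (chart_avoid H _ Wv). symmetry. exact E.
Qed.

(* Folding W so that Lp and
   Ln become 0, H extended by z |-> 0 is a homeomorphism Z = (-1, 1). *)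
Section Glue.
Variables sp Lp Ln : R.
Hypothesis sp_sign : unit_sign sp.
Hypothesis Lim_p : right_limit0 eps (path sp) Lp.
Hypothesis Lim_n : right_limit0 eps (path (- sp)) Ln.
Hypothesis Pos_p : forall tau, 0 < tau < eps -> 0 < path sp tau.
Hypothesis Neg_n : forall tau, 0 < tau < eps -> path (- sp) tau < 0.

Lemma sn_sign : unit_sign (- sp).
Proof. destruct sp_sign as [-> | ->]; [right|left]; ring. Qed.

Lemma Lp_endpoint : Lp = 0 \/ Lp = 1.
Proof.
  apply (W_limit_pos eps (path sp)).
  - apply eps_pos.
  - exact Lim_p.
  - intros t Ht. split; [apply path_W | apply Pos_p]; auto.
  - exact (path_limit_not_W sp Lp sp_sign Lim_p).
Qed.

Lemma Ln_endpoint : Ln = 0 \/ Ln = -1.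
Proof.
  apply (W_limit_neg eps (path (- sp))).
  - apply eps_pos.
  - exact Lim_n.
  - intros t Ht. split; [apply path_W; [apply sn_sign | exact Ht] | apply Neg_n; exact Ht].
  - exact (path_limit_not_W (- sp) Ln sn_sign Lim_n).
Qed.

Local Notation fd := (fold Lp Ln).

Lemma fold_path sg tau : unit_sign sg -> 0 < tau < eps ->
  (sg = sp /\ fd (path sg tau) = Rabs (path sg tau - Lp)) \/
  (sg = - sp /\ fd (path sg tau) = - Rabs (path sg tau - Ln)).
Proof.
  intros Hs Ht.
  assert (sg = sp \/ sg = - sp) as [-> | ->]
    by (destruct Hs as [-> | ->]; destruct sp_sign as [-> | ->]; [left|right|right|left]; lra).
  - left. split; auto. apply fold_pos. apply Pos_p; auto.
  - right. split; auto. apply fold_nonpos. left. apply Neg_n; auto.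
Qed.

Definition glue_map (y : Z) : R :=
  if excluded_middle_informative (y = z) then 0 else fd (chart_to H y).
Definition glue_inv (t : R) : Z :=
  if excluded_middle_informative (t = 0) then z else chart_from H (fd t).

Lemma glue_map_z : glue_map z = 0.
Proof. unfold glue_map. destruct (excluded_middle_informative (z = z)); [reflexivity|contradiction]. Qed.

Lemma glue_map_ne y : y <> z -> glue_map y = fd (chart_to H y).
Proof. intros Hy. unfold glue_map. destruct (excluded_middle_informative (y = z)); [contradiction|reflexivity]. Qed.

Lemma glue_inv_0 : glue_inv 0 = z.
Proof. unfold glue_inv. destruct (excluded_middle_informative (0 = 0)); [reflexivity|contradiction]. Qed.

Lemma glue_inv_ne t : t <> 0 -> glue_inv t = chart_from H (fd t).
Proof. intros Ht. unfold glue_inv. destruct (excluded_middle_informative (t = 0)); [contradiction|reflexivity]. Qed.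

Lemma glue_map_W y : y <> z -> W (glue_map y).
Proof. intros Hy. rewrite glue_map_ne by auto. apply fold_W; [apply Lp_endpoint|apply Ln_endpoint|]. apply (chart_in H); auto. Qed.

(* The glued map is continuous at z: points near z lie on the paths close to
   their ends, where the fold is small. *)
Lemma glue_map_cont_z eta : eta > 0 ->
  exists V, is_open Z V /\ V z /\ forall y, V y -> Rabs (glue_map y - 0) < eta.
Proof.
  intros Heta. destruct (Lim_p eta Heta) as [d1 [Hd1 [Hd1e B1]]].
  destruct (Lim_n eta Heta) as [d2 [Hd2 [Hd2e B2]]].
  exists (fun y => y <> w /\ Rabs (chart_to G y - s) < Rmin d1 d2). split; [apply G_ball_open|]. split.
  - split; [intro e; apply w_z; auto|]. rewrite Rminus_diag, Rabs_R0. unfold Rmin; destruct (Rle_dec _ _); lra.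
  - intros y [Hyw Hd]. rewrite Rminus_0_r.
    destruct (classic (y = z)) as [->|Hyz]; [rewrite glue_map_z, Rabs_R0; lra|].
    assert (Hd' : Rabs (chart_to G y - s) < d1 /\ Rabs (chart_to G y - s) < d2)
      by (unfold Rmin in Hd; destruct (Rle_dec _ _); split; lra).
    destruct (near_z_on_path y Hyz Hyw ltac:(unfold Rmin in Hd; destruct (Rle_dec _ _); lra))
      as [sg [tau [Hs [Ht [E Et]]]]].
    rewrite glue_map_ne, E by auto.
    destruct (fold_path sg tau Hs Ht) as [[-> F]|[-> F]]; rewrite F.
    + rewrite Rabs_Rabsolu. apply B1. lra.
    + rewrite Rabs_Ropp, Rabs_Rabsolu. apply B2. lra.
Qed.

(* The inverse is continuous at 0: by the intermediate value theorem, every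
   small folded value is attained on the paths near their ends, which lie in
   any given neighbourhood of z. *)
Lemma glue_inv_cont_0 U : is_open Z U -> U z ->
  exists eta, eta > 0 /\ forall t, -1 < t < 1 -> Rabs (t - 0) < eta -> U (glue_inv t).
Proof.
  intros HU Uz.
  destruct (chart_open_from G U HU s) as [del [Hdel Bdel]]; [split; [apply s_ne_x1|rewrite chart_from_s; auto]|].
  set (t0 := Rmin del eps / 2).
  assert (T0 : 0 < t0 < eps /\ t0 < del)
    by (pose proof eps_pos; unfold t0, Rmin; destruct (Rle_dec _ _); repeat split; lra).
  destruct T0 as [T0 T0'].
  assert (OnPath : forall sg tau, unit_sign sg -> 0 < tau <= t0 -> U (chart_from H (path sg tau))).
  { intros sg tau Hs Htau. rewrite path_back by (auto; lra).
    destruct (Bdel (s + tau * sg)) as [_ UU]; [rewrite unit_sign_dist; auto; lra | exact UU]. }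
  set (ap := Rabs (path sp t0 - Lp)). set (an := Rabs (path (- sp) t0 - Ln)).
  assert (Hap : ap > 0).
  { apply Rabs_pos_lt. intro E. apply (path_limit_not_W sp Lp sp_sign Lim_p).
    replace Lp with (path sp t0) by lra. apply path_W; auto. }
  assert (Han : an > 0).
  { apply Rabs_pos_lt. intro E. apply (path_limit_not_W (- sp) Ln sn_sign Lim_n).
    replace Ln with (path (- sp) t0) by lra. apply path_W; auto using sn_sign. }
  exists (Rmin ap an). split; [unfold Rmin; destruct (Rle_dec _ _); lra|].
  intros t It Ht. rewrite Rminus_0_r in Ht.
  assert (Hta : Rabs t < ap /\ Rabs t < an) by (unfold Rmin in Ht; destruct (Rle_dec _ _); split; lra).
  destruct Hta as [Hta Htn].
  destruct (Req_dec t 0) as [->|Hne]; [rewrite glue_inv_0; exact Uz|].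
  rewrite glue_inv_ne by auto.
  assert (Back : forall sg tau, unit_sign sg -> 0 < tau <= t0 -> fd (path sg tau) = t -> U (chart_from H (fd t))).
  { intros sg tau Hs Htau E. rewrite <- E, fold_involutive; [apply OnPath; auto | apply Lp_endpoint
      | apply Ln_endpoint | apply path_W; auto; lra]. }
  destruct (Rlt_le_dec 0 t) as [Pt|Nt].
  - rewrite Rabs_right in Hta by lra.
    destruct (right_limit0_distances eps (path sp) Lp t0 (path_cont sp sp_sign) Lim_p ltac:(lra) t)
      as [tau [Htau E]]; [fold ap; lra|].
    apply (Back sp tau sp_sign Htau). rewrite fold_pos by (apply Pos_p; lra). exact E.
  - rewrite Rabs_left in Htn by lra.
    destruct (right_limit0_distances eps (path (- sp)) Ln t0 (path_cont (- sp) sn_sign) Lim_n ltac:(lra) (- t))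
      as [tau [Htau E]]; [fold an; lra|].
    apply (Back (- sp) tau sn_sign Htau). rewrite fold_nonpos by (left; apply Neg_n; lra). rewrite E. ring.
Qed.

Lemma Z_homeo_interval : homeomorphic Z (subspace R_top (fun t => -1 < t < 1)).
Proof.
  assert (FLp := Lp_endpoint). assert (FLn := Ln_endpoint).
  apply (glue_point_homeo Z z _ 0 glue_map glue_inv glue_map_z glue_inv_0).
  - intro y. destruct (classic (y = z)) as [->|Hy]; [rewrite glue_map_z; lra|].
    apply W_iff, glue_map_W; auto.
  - intro y. destruct (classic (y = z)) as [->|Hy]; [rewrite glue_map_z; apply glue_inv_0|].
    rewrite glue_inv_ne by (apply W_iff, glue_map_W; auto).
    rewrite glue_map_ne, fold_involutive by (auto; apply (chart_in H); auto).
    apply (chart_from_to H); auto.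
  - intros t It. destruct (Req_dec t 0) as [->|Hne]; [rewrite glue_inv_0; apply glue_map_z|].
    assert (Wt : W t) by (apply W_iff; auto). destruct (fold_W Lp Ln FLp FLn t Wt) as [Wf _].
    rewrite glue_inv_ne, glue_map_ne by (auto; apply (chart_avoid H); auto).
    rewrite (chart_to_from H) by auto. apply fold_involutive; auto.
  - intros O HO. apply open_ext with (fun y => y <> z /\ (fun t => W t /\ O (fd t)) (chart_to H y)).
    + apply (chart_open_to H (fun t => W t /\ O (fd t))), fold_preimage_open; auto.
    + intro y. split; intros [Hy K]; split; auto; rewrite glue_map_ne in *; auto.
      * apply K.
      * split; auto. apply (chart_in H); auto.
  - exact glue_map_cont_z.
  - intros U HU. apply (open_ext R_top (fun t => W t /\ (fun u => W u /\ U (chart_from H u)) (fd t))).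
    + apply (fold_preimage_open Lp Ln (fun u => W u /\ U (chart_from H u))), (chart_open_from H); auto.
    + intro t. rewrite W_iff. split.
      * intros [[It Hne] [_ K]]. rewrite glue_inv_ne; auto.
      * intros [It [Hne K]]. rewrite glue_inv_ne in K by auto.
        assert (Wt : W t) by (apply W_iff; auto).
        exact (conj (conj It Hne) (conj (proj1 (fold_W Lp Ln FLp FLn t Wt)) K)).
  - exact glue_inv_cont_0.
Qed.

End Glue.

(* Z is a line: the two paths end in different halves of W. *)
Lemma Z_homeo_line : homeomorphic Z R_top.
Proof.
  assert (One : unit_sign 1) by (left; reflexivity).
  assert (MOne : unit_sign (-1)) by (right; reflexivity).
  destruct (path_limit 1 One) as [L1 Lim1].
  destruct (path_limit (-1) MOne) as [L2 Lim2].
  assert (Same : forall o, unit_sign o -> (forall tau, 0 < tau < eps -> 0 < o * path 1 tau) ->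
                   (forall tau, 0 < tau < eps -> 0 < o * path (-1) tau) -> False).
  { intros o Ho A1 A2. apply (paths_not_same_half o Ho).
    intros sg [-> | ->]; auto. }
  assert (HI : homeomorphic Z (subspace R_top (fun t => -1 < t < 1))).
  { destruct (path_sign 1 One) as [P1|N1]; destruct (path_sign (-1) MOne) as [P2|N2].
    - exfalso. apply (Same 1 One); intros; rewrite Rmult_1_l; auto.
    - apply (Z_homeo_interval 1 L1 L2 One); auto.
    - apply (Z_homeo_interval (-1) L2 L1 MOne); replace (- -1) with 1 by ring; auto.
    - exfalso. apply (Same (-1) MOne); intros tau Ht; [specialize (N1 tau Ht) | specialize (N2 tau Ht)]; lra. }
  eapply homeo_trans; [exact HI|].
  destruct (interval_order_iso (Some (-1)) (Some 1) None None) as [f [M _]]; simpl; try lra; auto.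
  eapply homeo_trans.
  { apply (sub_ext R_top _ (fun t => True /\ iv (Some (-1)) (Some 1) t)). intro t. unfold iv; simpl. tauto. }
  eapply homeo_trans.
  { exact (order_iso_homeo (fun _ => True) _ _ f (iv_open _ _) (iv_open None None) M (fun _ _ => iff_refl _)). }
  apply sub_all. intro t. unfold iv; simpl. tauto.
Qed.

End RealReconstruction.

Theorem R_reconstructible : reconstructible R_top.
Proof.
  intros Z HZ.
  destruct (deck_card_right _ _ HZ (0 : R_top)) as [z Hz].
  assert (HW : homeomorphic (card Z z) (subspace R_top W)) by (eapply homeo_trans; [exact Hz | apply R_card_W]).
  destruct (card_two_points _ _ z HW (exist W (-1/2) ltac:(unfold W; lra)) (exist W (1/2) ltac:(unfold W; lra)))
    as [a [c [Haz [Hcz Hac]]]].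
  { intro E. apply (f_equal (@proj1_sig _ _)) in E. simpl in E. lra. }
  assert (HZH : hausdorff Z) by (apply (reconstruction_hausdorff Z R_top HZ R_hausdorff z a c); auto).
  assert (T1 : t1 Z) by (apply hausdorff_t1; exact HZH).
  assert (Charts : forall v : Z, exists x, inhabited (chart Z v (fun t => t <> x))).
  { intro v. destruct (deck_card_left _ _ HZ v) as [x Hx]. exists x. apply chart_of_card; auto. apply R_open_ne. }
  destruct (chart_of_card Z z W T1 R_open_W HW) as [H].
  destruct (Charts a) as [x1 [G]].
  exact (Z_homeo_line Z HZH z a x1 Haz H G Charts).
Qed.

Theorem theorem2p2 :
  reconstructible R_top /\ reconstructible Q_top /\ reconstructible P_top.
Proof.
  exact (conj R_reconstructible (conj (Sp_reconstructible true) (Sp_reconstructible false))).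
Qed.
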